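(* Let $\omega$ be uniformly distributed on $\{0,1\}^{[n]}$. For $\lambda\in(0,1)$ let $\ell_\lambda:=\lfloor n^\lambda\rfloor$, $m_\lambda:=\lfloor n/\ell_\lambda\rfloor$, partition the first $m_\lambda\ell_\lambda$ coordinates into consecutive blocks of length $\ell_\lambda$, let $S_j$ be the sum of coordinates in the $j$th block, and $S^\lambda:=\max_{1\le j\le m_\lambda}S_j$. For $\lambda,\beta\in(0,1)$ define $$s_{\lambda,\beta}:=\frac{\ell_\lambda}{2}+\frac{\sqrt{\ell_\lambda}}{2}\sqrt{2(1-\lambda)\log n-\log\log n-2\log\Big(\sqrt{4\pi(1-\lambda)}\,\log\beta^{-1}\Big)}.$$ Then for every $\lambda,\beta\in(0,1)$, $\mathbb{P}(S^\lambda\le s_{\lambda,\beta})\to\beta$ as $n\to\infty$. *)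

From Stdlib Require Import Reals.
From mathcomp Require Import ssreflect ssrfun ssrbool eqtype ssrnat seq choice div fintype finfun bigop finset.
Unset Printing Implicit Defensive.

Definition ell (lam : R) (n : nat) : nat :=
  Z.to_nat (Int_part (Rpower (INR n) lam)).

Definition mblk (lam : R) (n : nat) : nat := (n %/ ell lam n)%N.

(* S_j : sum of the coordinates in the j-th block (0-indexed j),
   i.e. coordinates i with j*ell <= i < (j+1)*ell *)
Definition block_sum (lam : R) (n : nat) (w : {ffun 'I_n -> bool}) (j : nat) : nat :=
  (\sum_(i < n | (j * ell lam n <= i < j.+1 * ell lam n)%N) (w i : nat))%N.

Definition Smax (lam : R) (n : nat) (w : {ffun 'I_n -> bool}) : nat :=
  (\max_(j < mblk lam n) block_sum lam n w j)%N.

Local Open Scope R_scope.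

Definition s_thr (lam beta : R) (n : nat) : R :=
  (INR (ell lam n) / 2 + sqrt (INR (ell lam n)) / 2 *
    sqrt (2 * (1 - lam) * ln (INR n) - ln (ln (INR n))
          - 2 * ln (sqrt (4 * PI * (1 - lam)) * ln (/ beta))))%R.

Definition prob_event (lam beta : R) (n : nat) : R :=
  (INR #|[set w : {ffun 'I_n -> bool} | if Rle_dec (INR (Smax lam n w)) (s_thr lam beta n) then true else false]|
   / 2 ^ n)%R.

(* Cutting the first m l coordinates into m independent blocks of length l gives
   P(S^lambda <= s) = (1 - q)^m with q = P(Bin(l, 1/2) > s), so it suffices that
   m q -> ln (1/beta).  Here ln m = (1 - lambda) ln n + o(1).  Writing s = l/2 + a,
   Wallis' product for the central binomial coefficient, followed by a walk away from
   the centre, gives the local limit theorem for P(Bin(l, 1/2) = k) up to o(1) on the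
   log scale, and comparing the tail with geometric series gives
   ln q = - ln (PI l / 2) / 2 - 2 a^2 / l + ln (l / (4 a)) + o(1).  The threshold
   s_{lambda,beta} is tuned so that these terms add up to ln ln (1/beta) + o(1); finally
   (1 - q)^m -> exp (- ln (1/beta)) = beta. *)

From Stdlib Require Import Reals Lra Lia ZArith.
From Coquelicot Require Import Coquelicot.
From mathcomp Require Import ssreflect ssrfun ssrbool eqtype ssrnat seq choice div fintype finfun bigop finset binomial zify.

Set Implicit Arguments. Unset Strict Implicit. Unset Printing Implicit Defensive.
Local Open Scope nat_scope.

(** * Counting bit strings block by block *)

Fixpoint bitseqs (n : nat) : seq (seq bool) :=
  if n is n'.+1 then [seq true :: s | s <- bitseqs n'] ++ [seq false :: s | s <- bitseqs n']
  else [:: [::]].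

Lemma size_bitseqs n : size (bitseqs n) = 2 ^ n.
Proof. by elim: n => //= n IH; rewrite size_cat !size_map IH expnS mul2n addnn. Qed.

Lemma mem_map_cons (b c : bool) s (L : seq (seq bool)) :
  (b :: s \in [seq c :: t | t <- L]) = (b == c) && (s \in L).
Proof. by apply/mapP/andP => [[t tL [-> ->]] | [/eqP -> sL]]; [rewrite eqxx | exists s]. Qed.

Lemma mem_bitseqs n s : (s \in bitseqs n) = (size s == n).
Proof.
elim: n s => [|n IH] [|b s] //=; rewrite mem_cat.
- by case: orP => // -[] /mapP [].
- by rewrite !mem_map_cons IH eqSS; case: b; rewrite /= ?orbF.
Qed.

Lemma uniq_bitseqs n : uniq (bitseqs n).
Proof.
elim: n => //= n IH.
rewrite cat_uniq !map_inj_uniq ?IH //=; try by move=> x y [].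
by rewrite andbT; apply/hasPn => _ /mapP [s _ ->]; rewrite mem_map_cons.
Qed.

Lemma count_bitseqs_cat a b (P1 P2 : pred (seq bool)) :
  count (fun s => P1 (take a s) && P2 (drop a s)) (bitseqs (a + b)) =
  count P1 (bitseqs a) * count P2 (bitseqs b).
Proof.
elim: a P1 => [|a IH] P1 /=.
  rewrite (eq_count (a2 := fun s => P1 [::] && P2 s)) => [|s]; last by rewrite take0 drop0.
  by case: (P1 [::]); rewrite /= ?count_pred0 ?mul1n.
by rewrite !count_cat !count_map mulnDl -(IH (fun s => P1 (true :: s))) -IH.
Qed.

Definition all_blocks (l m : nat) (Q : pred (seq bool)) (s : seq bool) : bool :=
  all (fun j => Q (take l (drop (j * l) s))) (iota 0 m).

Lemma count_all_blocks l m r Q :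
  count (all_blocks l m Q) (bitseqs (m * l + r)) = count Q (bitseqs l) ^ m * 2 ^ r.
Proof.
elim: m => [|m IH].
  by rewrite mul0n add0n expn0 mul1n (eq_count (a2 := predT)) // count_predT size_bitseqs.
have split_head : all_blocks l m.+1 Q =1 (fun s => Q (take l s) && all_blocks l m Q (drop l s)).
  move=> s; rewrite /all_blocks /= drop0; congr andb.
  rewrite -(addn0 1) iotaDl all_map; apply: eq_all => j /=.
  by rewrite drop_drop add1n mulSn addnC.
by rewrite mulSn -addnA (eq_count split_head) count_bitseqs_cat IH expnS mulnA.
Qed.

Lemma count_bitseqs_weight l (P : pred nat) :
  count (fun v => P (count id v)) (bitseqs l) = \sum_(0 <= k < l.+1) P k * 'C(l, k).
Proof.
elim: l P => [|l IH] P; first by rewrite /= big_nat1 bin0 muln1 addn0.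
rewrite /= count_cat !count_map.
rewrite (eq_count (a1 := preim _ _) (a2 := fun v => P (count id v).+1)) //.
rewrite (eq_count (a1 := preim _ _) (a2 := fun v => P (count id v))) //.
rewrite (IH (fun k => P k.+1)) IH.
have recr : \sum_(0 <= k < l.+2) P k * 'C(l, k) = \sum_(0 <= k < l.+1) P k * 'C(l, k).
  by rewrite big_nat_recr //= bin_small // muln0 addn0.
rewrite -recr [in X in _ + X = _]big_nat_recl // [RHS]big_nat_recl // !bin0.
under [in RHS]eq_bigr => i _ do rewrite binS mulnDr.
by rewrite big_split /=; lia.
Qed.

Definition ffun_seq n (w : {ffun 'I_n -> bool}) : seq bool := [seq w i | i <- enum 'I_n].

Lemma size_ffun_seq n (w : {ffun 'I_n -> bool}) : size (ffun_seq w) = n.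
Proof. by rewrite size_map size_enum_ord. Qed.

Lemma nth_ffun_seq n (w : {ffun 'I_n -> bool}) (i : 'I_n) : nth false (ffun_seq w) i = w i.
Proof. by rewrite (nth_map i) ?size_enum_ord // nth_ord_enum. Qed.

Lemma ffun_seq_inj n : injective (@ffun_seq n).
Proof. by move=> w1 w2 e; apply/ffunP => i; rewrite -!nth_ffun_seq e. Qed.

Lemma ffun_seqK n (s : seq bool) : size s = n -> ffun_seq [ffun i : 'I_n => nth false s i] = s.
Proof.
move=> sz; rewrite /ffun_seq.
have -> : [seq [ffun i : 'I_n => nth false s i] i | i <- enum 'I_n] =
          [seq nth false s i | i <- [seq val i | i <- enum 'I_n]].
  by rewrite -map_comp; apply: eq_map => i /=; rewrite ffunE.
by rewrite val_enum_ord -sz -/(mkseq _ _) mkseq_nth.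
Qed.

Lemma card_ffun_seq n (P : pred (seq bool)) :
  #|[set w : {ffun 'I_n -> bool} | P (ffun_seq w)]| = count P (bitseqs n).
Proof.
rewrite cardE -(size_map (@ffun_seq n)) -size_filter.
apply/perm_size/uniq_perm => [||s].
- by rewrite map_inj_uniq ?enum_uniq //; apply: ffun_seq_inj.
- by rewrite filter_uniq ?uniq_bitseqs.
rewrite mem_filter mem_bitseqs; apply/mapP/andP => [[w] | [Ps /eqP sz]].
  by rewrite mem_enum inE => Pw ->; rewrite Pw size_ffun_seq.
by exists [ffun i : 'I_n => nth false s i]; rewrite ?mem_enum ?inE ffun_seqK.
Qed.


Lemma sum_nth_bits (s : seq bool) d l : d + l <= size s ->
  \sum_(d <= i < d + l) (nth false s i : nat) = count id (take l (drop d s)).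
Proof.
elim: l => [|l IH] lim; first by rewrite addn0 big_geq // take0.
rewrite addnS big_nat_recr /= ?IH; [|lia|lia].
rewrite (take_nth false) ?size_drop; last by lia.
by rewrite -cats1 count_cat nth_drop /= addn0.
Qed.

Lemma block_sum_count (l n j : nat) (w : {ffun 'I_n -> bool}) : j.+1 * l <= n ->
  \sum_(i < n | j * l <= i < j.+1 * l) (w i : nat) = count id (take l (drop (j * l) (ffun_seq w))).
Proof.
move=> jn; rewrite -sum_nth_bits; last by rewrite size_ffun_seq; lia.
rewrite (big_nat_widen (j * l) (j * l + l) n); last by lia.
rewrite (big_nat_widenl (j * l) 0 n) // big_mkord.
apply: congr_big => // [i|i _]; last by rewrite nth_ffun_seq.
by rewrite /= mulSn (addnC l); case: (j * l <= i); rewrite ?andbT ?andbF.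
Qed.

Unset Implicit Arguments. Set Strict Implicit.
Local Open Scope R_scope.

(** * Central binomial coefficients *)

Lemma le_INRn m n : (m <= n)%N -> INR m <= INR n.
Proof. by move=> /leP; apply: le_INR. Qed.

Lemma lt_INRn m n : (m < n)%N -> INR m < INR n.
Proof. by move=> /ltP; apply: lt_INR. Qed.

Lemma INRn_le m n : INR m <= INR n -> (m <= n)%N.
Proof. by move=> /INR_le /leP. Qed.

Lemma INR_double n : INR n.*2 = 2 * INR n.
Proof. by rewrite -mul2n mult_INR. Qed.

Lemma INR_expn a k : INR (a ^ k)%N = INR a ^ k.
Proof. by elim: k => // k IH; rewrite expnS mult_INR IH. Qed.

Definition wallis (n : nat) : R := RInt (fun x => sin x ^ n) 0 (PI / 2).

Lemma ex_RInt_sin_pow n a b : ex_RInt (fun x => sin x ^ n) a b.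
Proof. by apply: ex_RInt_continuous => z _; apply: ex_derive_continuous; auto_derive. Qed.

Lemma wallis_rec n : INR n.+2 * wallis n.+2 = INR n.+1 * wallis n.
Proof.
pose F x := - cos x * sin x ^ n.+1.
pose f x := INR n.+2 * sin x ^ n.+2 - INR n.+1 * sin x ^ n.
have ftc : is_RInt f 0 (PI / 2) (minus (F (PI / 2)) (F 0)).
  apply: is_RInt_derive => x _; last by apply: ex_derive_continuous; rewrite /f; auto_derive.
  have cos2 : cos x * cos x = 1 - sin x * sin x by have := sin2_cos2 x; rewrite /Rsqr; lra.
  have -> : f x = - (- sin x * sin x ^ n.+1 + INR n.+1 * (cos x * cos x) * sin x ^ n).
    by rewrite /f cos2 (S_INR n.+1) /=; ring.
  by rewrite /F; auto_derive => //=; ring.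
have lin : is_RInt f 0 (PI / 2) (INR n.+2 * wallis n.+2 - INR n.+1 * wallis n).
  by apply: is_RInt_minus; apply: is_RInt_scal; apply: RInt_correct; apply: ex_RInt_sin_pow.
move: (is_RInt_unique _ _ _ _ ftc); rewrite (is_RInt_unique _ _ _ _ lin) /F.
by rewrite cos_PI2 cos_0 sin_0 /minus /plus /opp /=; lra.
Qed.

Lemma wallis0 : wallis 0 = PI / 2.
Proof. by rewrite /wallis /= RInt_const /scal /= /mult /=; ring. Qed.

Lemma wallis1 : wallis 1 = 1.
Proof.
have ftc : is_RInt (fun x => sin x ^ 1) 0 (PI / 2) (minus (- cos (PI / 2)) (- cos 0)).
  apply: (is_RInt_derive (fun x => - cos x)) => x _; first by auto_derive => //; ring.
  by apply: ex_derive_continuous; auto_derive.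
by rewrite /wallis (is_RInt_unique _ _ _ _ ftc) cos_PI2 cos_0 /minus /plus /opp /=; ring.
Qed.

Lemma wallis_decr n : wallis n.+1 <= wallis n.
Proof.
have pi_gt0 := PI_RGT_0.
apply: RInt_le; try apply: ex_RInt_sin_pow; first lra.
move=> x x_in.
have sin_ge0 : 0 <= sin x by apply: sin_ge_0; lra.
have sin_le1 : sin x <= 1 by have := SIN_bound x; lra.
have := pow_le _ n sin_ge0; rewrite /=; nra.
Qed.

Lemma wallis_gt0 n : 0 < wallis n.
Proof.
suff : 0 < wallis n /\ 0 < wallis n.+1 by case.
elim: n => [|n [IH1 IH2]]; first by rewrite wallis0 wallis1; have := PI_RGT_0; lra.
split => //.
have n2_gt0 : 0 < INR n.+2 by apply: lt_0_INR; lia.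
have -> : wallis n.+2 = INR n.+1 * wallis n / INR n.+2 by rewrite -wallis_rec; field; lra.
by apply: Rdiv_lt_0_compat => //; apply: Rmult_lt_0_compat => //; apply: lt_0_INR; lia.
Qed.

Lemma wallis_prod n : INR n.+1 * wallis n.+1 * wallis n = PI / 2.
Proof.
elim: n => [|n IH]; first by rewrite wallis0 wallis1 /=; ring.
by rewrite -{}IH wallis_rec; ring.
Qed.

Definition central_bin (h : nat) : R := INR 'C(h.*2, h) / 4 ^ h.

Lemma bin_double_succ h :
  ('C(h.+1.*2, h.+1) * h.+1 * h.+1 = 'C(h.*2, h) * h.*2.+1 * h.*2.+2)%N.
Proof.
have e1 := mul_bin_diag (h.*2.+2) h.
have e2 := mul_bin_diag (h.*2.+1) h.
have e3 : 'C(h.*2.+1, h) = 'C(h.*2.+1, h.+1).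
  by rewrite -bin_sub; [congr 'C(_, _); lia | lia].
rewrite /= e3 in e1; rewrite /= in e2; rewrite doubleS.
set A := 'C(h.*2.+2, h.+1) in e1 *; set B := 'C(h.*2.+1, h.+1) in e1 e2 *.
rewrite (mulnC A) -e1 -mulnA (mulnC B) -e2.
by rewrite [LHS]mulnC (mulnC _ 'C(h.*2, h)).
Qed.

Lemma wallis_double h : wallis h.*2 = PI / 2 * central_bin h.
Proof.
elim: h => [|h IH]; first by rewrite wallis0 /central_bin /=; field.
have rec := bin_double_succ h.
have rec' : INR 'C(h.+1.*2, h.+1) * INR h.+1 * INR h.+1
            = INR 'C(h.*2, h) * INR h.*2.+1 * INR h.*2.+2.
  by have := f_equal INR rec; rewrite !mult_INR.
have h2 : INR h.*2.+2 = 2 * INR h.+1 by rewrite -!mul2n !S_INR !mult_INR /=; ring.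
have h1_gt0 : 0 < INR h.+1 by apply: lt_0_INR; lia.
have -> : wallis h.+1.*2 = INR h.*2.+1 * wallis h.*2 / INR h.*2.+2.
  by rewrite doubleS -wallis_rec; field; lra.
rewrite IH /central_bin.
have -> : INR 'C(h.+1.*2, h.+1) = INR 'C(h.*2, h) * INR h.*2.+1 * INR h.*2.+2 / (INR h.+1 * INR h.+1).
  by rewrite -rec'; field; lra.
rewrite h2 -tech_pow_Rmult.
by have p4 := pow_lt 4 h ltac:(lra); field; lra.
Qed.

Lemma central_bin_sqr_bounds h : (1 <= h)%N ->
  2 / (PI * (2 * INR h + 1)) <= central_bin h ^ 2 <= 1 / (PI * INR h).
Proof.
move=> h_ge1.
have pi_gt0 := PI_RGT_0.
have hR : 1 <= INR h by apply: (le_INR 1); apply/leP.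
have cW : central_bin h = 2 / PI * wallis h.*2 by rewrite wallis_double; field; lra.
have pred2 : (h.*2).-1.+1 = h.*2 by lia.
have prod_up := wallis_prod h.*2.
have prod_lo := wallis_prod (h.*2).-1; rewrite pred2 in prod_lo.
have decr_up := wallis_decr h.*2.
have decr_lo := wallis_decr (h.*2).-1; rewrite pred2 in decr_lo.
have W_gt0 := wallis_gt0 h.*2.
have W1_gt0 := wallis_gt0 h.*2.+1.
rewrite S_INR INR_double in prod_up; rewrite INR_double in prod_lo.
rewrite cW; split.
- apply: (Rmult_le_reg_l (PI * (2 * INR h + 1))); first nra.
  have -> : PI * (2 * INR h + 1) * (2 / (PI * (2 * INR h + 1))) = 2 by field; lra.
  have -> : PI * (2 * INR h + 1) * (2 / PI * wallis h.*2) ^ 2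
            = 4 / PI * ((2 * INR h + 1) * wallis h.*2 * wallis h.*2) by field; lra.
  apply: (Rle_trans _ (4 / PI * (PI / 2))); first by right; field; lra.
  apply: Rmult_le_compat_l; first by apply: Rlt_le; apply: Rdiv_lt_0_compat; lra.
  by rewrite -prod_up; nra.
- apply: (Rmult_le_reg_l (PI * INR h)); first nra.
  have -> : PI * INR h * (1 / (PI * INR h)) = 1 by field; lra.
  have -> : PI * INR h * (2 / PI * wallis h.*2) ^ 2
            = 2 / PI * (2 * INR h * wallis h.*2 * wallis h.*2) by field; lra.
  apply: (Rle_trans _ (2 / PI * (PI / 2))); last by right; field; lra.
  apply: Rmult_le_compat_l; first by apply: Rlt_le; apply: Rdiv_lt_0_compat; lra.
  by rewrite -prod_lo; nra.
Qed.

(** * A local limit theorem for Bin(l, 1/2) *)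

Lemma ln_le_sub1 x : 0 < x -> ln x <= x - 1.
Proof.
move=> x_gt0; rewrite -[X in _ <= X]ln_exp.
by apply: ln_le => //; have := exp_ineq1_le (x - 1); lra.
Qed.

Lemma ln_sub_le u v : 0 < u -> 0 < v -> ln u - ln v <= (u - v) / v.
Proof.
move=> u_gt0 v_gt0; rewrite -ln_div // (_ : (u - v) / v = u / v - 1); last by field; lra.
by apply: ln_le_sub1; apply: Rdiv_lt_0_compat.
Qed.

Lemma Rabs_ln_le a y : 0 < a -> a <= y <= 1 -> Rabs (ln y) <= (1 - a) / a.
Proof.
move=> a_gt0 y_in.
have ln_le0 : ln y <= 0 by rewrite -ln_1; apply: ln_le; lra.
have := ln_sub_le 1 y ltac:(lra) ltac:(lra); rewrite ln_1 Rabs_left1 // => ln_ge.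
suff : (1 - y) / y <= (1 - a) / a by lra.
apply: (Rle_trans _ ((1 - a) / y)).
  by apply: Rmult_le_compat_r; [apply: Rlt_le; apply: Rinv_0_lt_compat |]; lra.
by apply: Rmult_le_compat_l; [| apply: Rinv_le_contravar]; lra.
Qed.

Lemma ln_one_sub_ge y : 0 <= y <= 1 / 2 -> - y - 2 * y ^ 2 <= ln (1 - y).
Proof.
move=> y_in; have := ln_sub_le 1 (1 - y) ltac:(lra) ltac:(lra); rewrite ln_1.
suff : (1 - (1 - y)) / (1 - y) <= y + 2 * y ^ 2 by lra.
apply: (Rmult_le_reg_r (1 - y)); first lra.
by rewrite (_ : (1 - (1 - y)) / (1 - y) * (1 - y) = y); [nra | field; lra].
Qed.

Lemma ln_one_sub_le y : y < 1 -> ln (1 - y) <= - y.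
Proof. by move=> y_lt1; have := ln_le_sub1 (1 - y) ltac:(lra); lra. Qed.

Lemma ln_one_add_ge y : 0 <= y -> y - y ^ 2 <= ln (1 + y).
Proof.
move=> y_ge0; have := ln_sub_le 1 (1 + y) ltac:(lra) ltac:(lra); rewrite ln_1.
suff : y - y ^ 2 <= y / (1 + y) by rewrite (_ : (1 - (1 + y)) / (1 + y) = - (y / (1 + y))); [lra | field; lra].
apply: (Rmult_le_reg_r (1 + y)); first lra.
by rewrite (_ : y / (1 + y) * (1 + y) = y); [nra | field; lra].
Qed.

Lemma ln_one_add_le y : -1 < y -> ln (1 + y) <= y.
Proof. by move=> y_gt; have := ln_le_sub1 (1 + y) ltac:(lra); lra. Qed.

Lemma Rabs_ln_one_sub_add y : Rabs y <= 1 / 2 -> Rabs (ln (1 - y) + y) <= 2 * y ^ 2.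
Proof.
move=> y_le; apply: Rabs_le; case: (Rle_lt_dec 0 y) => [y_ge0 | y_lt0].
  by have := ln_one_sub_ge y ltac:(split_Rabs; lra); have := ln_one_sub_le y ltac:(split_Rabs; lra); lra.
rewrite (_ : 1 - y = 1 + - y); last ring.
by have := ln_one_add_ge (- y) ltac:(lra); have := ln_one_add_le (- y) ltac:(lra); nra.
Qed.

Lemma INR_bin_gt0 l k : (k <= l)%N -> 0 < INR 'C(l, k).
Proof. by move=> kl; apply/lt_0_INR/ltP; rewrite bin_gt0. Qed.

Lemma INR_binS l k : (k < l)%N ->
  INR 'C(l, k.+1) = INR 'C(l, k) * ((INR l - INR k) / (INR k + 1)).
Proof.
move=> kl; have := f_equal INR (mul_bin_left l k).
rewrite !mult_INR minus_INR ?S_INR; last by apply/leP; lia.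
by have := pos_INR k; move=> ? e; apply: (Rmult_eq_reg_l (INR k + 1)); [rewrite e; field |]; lra.
Qed.

(* [bin_log_err l k] is the error of the local limit theorem
   P(Bin(l, 1/2) = k) ~ sqrt (2 / (PI l)) exp (- 2 (k - l/2)^2 / l), on the log scale. *)
Definition gauss_exponent (l k : nat) : R := 2 * (INR k - INR l / 2) ^ 2 / INR l.
Definition bin_log_err (l k : nat) : R :=
  ln (INR 'C(l, k) / 2 ^ l) + gauss_exponent l k + / 2 * ln (PI * INR l / 2).

Lemma bin_log_err_step l k : (0 < l)%N -> (l <= k.*2)%N -> (4 * k.+1 <= 3 * l)%N ->
  Rabs (bin_log_err l k.+1 - bin_log_err l k) <= 3 * ((2 * INR k + 2 - INR l) / INR l) ^ 2.
Proof.
move=> l_gt0 l_le k_le.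
have lR : 0 < INR l by apply: lt_0_INR; apply/ltP.
have kl : (k < l)%N by lia.
have C_gt0 := INR_bin_gt0 l k (ltnW kl).
have l_leR : INR l <= 2 * INR k.
  by have := le_INRn _ _ l_le; rewrite INR_double.
have k_leR : 4 * (INR k + 1) <= 3 * INR l.
  by have := le_INRn _ _ k_le; rewrite !mult_INR !S_INR INR_0; lra.
set y1 := (2 * INR k - INR l) / INR l.
set y2 := (2 * INR k + 2 - INR l) / INR l.
have y1_in : 0 <= y1 <= 1 / 2.
  by split; [apply: Rdiv_le_0_compat | apply/Rle_div_l]; lra.
have y2_in : 0 <= y2 <= 1 / 2.
  by split; [apply: Rdiv_le_0_compat | apply/Rle_div_l]; lra.
have ratio : (INR l - INR k) / (INR k + 1) = (1 - y1) / (1 + y2) by rewrite /y1 /y2; field; lra.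
have step_eq : bin_log_err l k.+1 - bin_log_err l k = ln (1 - y1) - ln (1 + y2) + (y1 + y2).
  have p2 : 0 < 2 ^ l by apply: pow_lt; lra.
  have c_gt0 : 0 < INR 'C(l, k) / 2 ^ l by apply: Rdiv_lt_0_compat.
  have inv_gt0 : 0 < / (1 + y2) by apply: Rinv_0_lt_compat; lra.
  rewrite /bin_log_err /gauss_exponent (INR_binS l k kl) ratio S_INR.
  rewrite (_ : _ * _ / 2 ^ l = INR 'C(l, k) / 2 ^ l * (1 - y1) * / (1 + y2)); last first.
    by field; split; lra.
  set c := INR 'C(l, k) / 2 ^ l in c_gt0 *.
  rewrite (ln_mult (c * (1 - y1))) ?(ln_mult c) ?ln_Rinv; try lra; last by apply: Rmult_lt_0_compat; lra.
  by rewrite /y1 /y2; field; lra.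
rewrite step_eq; apply: Rabs_le.
have := ln_one_sub_ge y1 y1_in; have := ln_one_sub_le y1 ltac:(lra).
have := ln_one_add_ge y2 ltac:(lra); have := ln_one_add_le y2 ltac:(lra).
have : y1 <= y2 by apply: Rmult_le_compat_r; [apply: Rlt_le; apply: Rinv_0_lt_compat | ]; lra.
split; nra.
Qed.

Lemma bin_log_err_walk l k d : (0 < l)%N -> (l <= k.*2)%N -> (4 * (k + d) <= 3 * l)%N ->
  Rabs (bin_log_err l (k + d) - bin_log_err l k)
  <= 3 * INR d * ((2 * INR (k + d) - INR l) / INR l) ^ 2.
Proof.
move=> l_gt0 l_le; elim: d => [|d IH] kd_le.
  by rewrite addn0 Rminus_diag Rabs_R0 /=; lra.
have lR : 0 < INR l by apply: lt_0_INR; apply/ltP.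
have kR : INR l <= 2 * INR k by have := le_INRn _ _ l_le; rewrite INR_double.
have := bin_log_err_step l (k + d) l_gt0 ltac:(lia) ltac:(lia); rewrite -addnS.
rewrite (_ : 2 * INR (k + d) + 2 - INR l = 2 * INR (k + d.+1) - INR l); last first.
  by rewrite addnS S_INR; ring.
have := IH ltac:(lia).
set Y0 := (2 * INR (k + d) - INR l) / INR l; set Y1 := (2 * INR (k + d.+1) - INR l) / INR l.
have Y_le : 0 <= Y0 <= Y1.
  rewrite /Y0 /Y1 addnS S_INR plus_INR; have := pos_INR d.
  by split; [apply: Rdiv_le_0_compat | apply: Rmult_le_compat_r; [apply: Rlt_le; apply: Rinv_0_lt_compat |]]; lra.
have Y_sqr : Y0 ^ 2 <= Y1 ^ 2 by rewrite /=; nra.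
have := Rabs_triang (bin_log_err l (k + d.+1) - bin_log_err l (k + d)) (bin_log_err l (k + d) - bin_log_err l k).
rewrite S_INR; have := pos_INR d.
rewrite (_ : forall a b c, a - b + (b - c) = a - c); last by move=> a b c; ring.
nra.
Qed.

Lemma bin_log_err_sqr l k : (0 < l)%N -> (k <= l)%N ->
  bin_log_err l k = / 2 * ln ((INR 'C(l, k) / 2 ^ l) ^ 2 * (PI * INR l / 2)) + gauss_exponent l k.
Proof.
move=> l_gt0 kl.
have lR : 0 < INR l by apply: lt_0_INR; apply/ltP.
have p_gt0 : 0 < INR 'C(l, k) / 2 ^ l.
  by apply: Rdiv_lt_0_compat; [apply: INR_bin_gt0 | apply: pow_lt; lra].
have x_gt0 : 0 < PI * INR l / 2 by have := PI_RGT_0; move=> ?; apply: Rdiv_lt_0_compat; nra.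
rewrite /bin_log_err ln_mult ?ln_pow //; last by apply: pow_lt.
by rewrite (_ : INR 2 = 2) //; field.
Qed.

Lemma bin_log_err_double h : (1 <= h)%N -> Rabs (bin_log_err h.*2 h) <= 8 / INR h.*2.
Proof.
move=> h_ge1.
have pi_gt0 := PI_RGT_0.
have hR : 1 <= INR h by apply: (le_INR 1); apply/leP.
have lR := INR_double h.
have [lo up] := central_bin_sqr_bounds h h_ge1.
rewrite bin_log_err_sqr; [|lia|lia].
have -> : INR 'C(h.*2, h) / 2 ^ h.*2 = central_bin h.
  by rewrite /central_bin -mul2n pow_mult /= Rmult_1_r.
have -> : gauss_exponent h.*2 h = 0 by rewrite /gauss_exponent lR; field; lra.
rewrite Rplus_0_r lR; set c := central_bin h in lo up *.
have Z_in : 2 * INR h / (2 * INR h + 1) <= c ^ 2 * (PI * (2 * INR h) / 2) <= 1.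
  rewrite (_ : c ^ 2 * (PI * (2 * INR h) / 2) = c ^ 2 * (PI * INR h)); last by field.
  split.
  - apply: (Rle_trans _ (2 / (PI * (2 * INR h + 1)) * (PI * INR h))); first by right; field; lra.
    by apply: Rmult_le_compat_r; nra.
  - apply: (Rle_trans _ (1 / (PI * INR h) * (PI * INR h))); last by right; field; lra.
    by apply: Rmult_le_compat_r; nra.
have := Rabs_ln_le (2 * INR h / (2 * INR h + 1)) _ ltac:(apply: Rdiv_lt_0_compat; lra) Z_in.
rewrite (_ : (1 - 2 * INR h / (2 * INR h + 1)) / (2 * INR h / (2 * INR h + 1)) = / (2 * INR h));
  last by field; lra.
move=> ln_le; rewrite Rabs_mult Rabs_right; last lra.
apply: (Rle_trans _ (/ 2 * / (2 * INR h))); first by apply: Rmult_le_compat_l; lra.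
apply: (Rmult_le_reg_r (4 * INR h)); first lra.
rewrite (_ : / 2 * / (2 * INR h) * (4 * INR h) = 1); last by field; lra.
by rewrite (_ : 8 / (2 * INR h) * (4 * INR h) = 16); [lra | field; lra].
Qed.

Lemma central_bin_succ h :
  INR 'C(h.*2.+1, h.+1) / 2 ^ h.*2.+1 = central_bin h * ((2 * INR h + 1) / (2 * INR h + 2)).
Proof.
have := f_equal INR (mul_bin_diag h.*2.+1 h); rewrite /= !mult_INR => diag.
have h_ge0 := pos_INR h.
have -> : INR 'C(h.*2.+1, h.+1) = INR h.*2.+1 * INR 'C(h.*2, h) / INR h.+1.
  by rewrite diag; field; rewrite S_INR; lra.
rewrite /central_bin -mul2n pow_mult (_ : 2 ^ 2 = 4) ?S_INR ?mult_INR; last by ring.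
have -> : INR 2 = 2 by rewrite /=; lra.
by have := pow_lt 4 h ltac:(lra); move=> ?; field; lra.
Qed.

Lemma central_bin_succ_sqr_bounds h : (1 <= h)%N ->
  INR h / (INR h + 1)
  <= (central_bin h * ((2 * INR h + 1) / (2 * INR h + 2))) ^ 2 * (PI * (2 * INR h + 1) / 2) <= 1.
Proof.
move=> h_ge1.
have pi_gt0 := PI_RGT_0.
have hR : 1 <= INR h by apply: (le_INR 1); apply/leP.
have [lo up] := central_bin_sqr_bounds h h_ge1.
set r := PI * (2 * INR h + 1) ^ 3 / (2 * (2 * INR h + 2) ^ 2).
have r_gt0 : 0 < r by apply: Rdiv_lt_0_compat; [apply: Rmult_lt_0_compat => //; apply: pow_lt |]; nra.
rewrite (_ : _ * (PI * _ / 2) = central_bin h ^ 2 * r); last by rewrite /r; field; lra.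
split.
- apply: (Rle_trans _ (2 / (PI * (2 * INR h + 1)) * r)); last by apply: Rmult_le_compat_r; lra.
  rewrite (_ : 2 / (PI * (2 * INR h + 1)) * r = (2 * INR h + 1) ^ 2 / (2 * INR h + 2) ^ 2);
    last by rewrite /r; field; lra.
  apply: (Rmult_le_reg_r ((INR h + 1) * (2 * INR h + 2) ^ 2)); first nra.
  rewrite (_ : INR h / (INR h + 1) * _ = INR h * (2 * INR h + 2) ^ 2); last by field; lra.
  by rewrite (_ : _ / _ * _ = (2 * INR h + 1) ^ 2 * (INR h + 1)); [nra | field; lra].
- apply: (Rle_trans _ (1 / (PI * INR h) * r)); first by apply: Rmult_le_compat_r; lra.
  rewrite (_ : 1 / (PI * INR h) * r = (2 * INR h + 1) ^ 3 / (2 * INR h * (2 * INR h + 2) ^ 2));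
    last by rewrite /r; field; lra.
  apply: (Rmult_le_reg_r (2 * INR h * (2 * INR h + 2) ^ 2)); first nra.
  by rewrite (_ : _ / _ * _ = (2 * INR h + 1) ^ 3); [nra | field; lra].
Qed.

Lemma bin_log_err_double_succ h : (1 <= h)%N ->
  Rabs (bin_log_err h.*2.+1 h.+1) <= 8 / INR h.*2.+1.
Proof.
move=> h_ge1.
have hR : 1 <= INR h by apply: (le_INR 1); apply/leP.
have lR : INR h.*2.+1 = 2 * INR h + 1 by rewrite S_INR INR_double.
rewrite bin_log_err_sqr ?central_bin_succ; try lia.
have -> : gauss_exponent h.*2.+1 h.+1 = / (2 * (2 * INR h + 1)).
  by rewrite /gauss_exponent lR S_INR; field; lra.
have Z_in := central_bin_succ_sqr_bounds h h_ge1; rewrite lR.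
have := Rabs_ln_le (INR h / (INR h + 1)) _ ltac:(apply: Rdiv_lt_0_compat; lra) Z_in.
rewrite (_ : (1 - INR h / (INR h + 1)) / (INR h / (INR h + 1)) = / INR h); last by field; lra.
move=> ln_le.
apply: (Rle_trans _ _ _ (Rabs_triang _ _)).
rewrite Rabs_mult (Rabs_right (/ 2)); last lra.
rewrite (Rabs_right (/ (2 * (2 * INR h + 1)))); last by apply: Rle_ge; apply: Rlt_le; apply: Rinv_0_lt_compat; lra.
apply: (Rle_trans _ (/ 2 * / INR h + / (2 * (2 * INR h + 1)))).
  by apply: Rplus_le_compat_r; apply: Rmult_le_compat_l; lra.
apply: (Rmult_le_reg_r (2 * INR h * (2 * INR h + 1))); first nra.
rewrite (_ : (/ 2 * / INR h + / (2 * (2 * INR h + 1))) * _ = 3 * INR h + 1); last by field; lra.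
by rewrite (_ : 8 / (2 * INR h + 1) * _ = 16 * INR h); [lra | field; lra].
Qed.

Lemma bin_log_err_center l : (2 <= l)%N -> Rabs (bin_log_err l (uphalf l)) <= 8 / INR l.
Proof.
move=> l_ge2; rewrite uphalf_half.
have := odd_double_half l; case: (odd l) => /= l_eq; rewrite -{1 3}l_eq.
- by apply: bin_log_err_double_succ; lia.
- by rewrite add0n; apply: bin_log_err_double; lia.
Qed.

Lemma bin_log_err_bound l K : (2 <= l)%N -> (uphalf l <= K)%N -> (4 * K <= 3 * l)%N ->
  Rabs (bin_log_err l K)
  <= 8 / INR l + 3 * (INR K - INR l / 2) * ((2 * INR K - INR l) / INR l) ^ 2.
Proof.
move=> l_ge2 K_ge K_le.
have lR : 0 < INR l by apply: lt_0_INR; apply/ltP; lia.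
have up_ge : (l <= (uphalf l).*2)%N by rewrite uphalf_half; have := odd_double_half l; lia.
have := bin_log_err_walk l (uphalf l) (K - uphalf l) ltac:(lia) up_ge ltac:(lia).
rewrite subnKC // => walk.
have := bin_log_err_center l l_ge2.
have d_le : INR (K - uphalf l) <= INR K - INR l / 2.
  rewrite minus_INR; last by apply/leP.
  by have := le_INRn _ _ up_ge; rewrite INR_double; lra.
have := pow2_ge_0 ((2 * INR K - INR l) / INR l).
have := Rabs_triang (bin_log_err l K - bin_log_err l (uphalf l)) (bin_log_err l (uphalf l)).
rewrite (_ : forall a b, a - b + b = a); last by move=> a b; ring.
nra.
Qed.

(** * Tails of Bin(l, 1/2) *)

Lemma sum_f_R0_scal (f : nat -> R) c N : sum_f_R0 (fun j => c * f j) N = c * sum_f_R0 f N.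
Proof. by elim: N => //= N ->; ring. Qed.

Lemma sum_f_R0_le_N (f : nat -> R) M N : (forall j, 0 <= f j) -> (M <= N)%N ->
  sum_f_R0 f M <= sum_f_R0 f N.
Proof.
move=> f_ge0; elim: N => [|N IH] MN; first by rewrite (_ : M = 0%N); [lra | lia].
case: (leqP M N) => [/IH | NM]; first by have := f_ge0 N.+1; rewrite /=; lra.
by rewrite (_ : M = N.+1); [lra | lia].
Qed.

Definition bin_tail (l k0 : nat) : R := sum_f_R0 (fun j => INR 'C(l, k0 + j)) (l - k0).

Lemma bin_tail_gt0 l k0 : (k0 <= l)%N -> 0 < bin_tail l k0.
Proof.
move=> k0l; rewrite /bin_tail; elim: (l - k0)%N => [|K IH] /=.
  by rewrite addn0; apply: INR_bin_gt0.
by have := pos_INR 'C(l, k0 + K.+1); lra.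
Qed.

Lemma bin_shift_le_geom l k0 j : (k0 <= l)%N ->
  INR 'C(l, k0 + j) <= INR 'C(l, k0) * ((INR l - INR k0) / (INR k0 + 1)) ^ j.
Proof.
move=> k0l; have k0R := le_INRn _ _ k0l.
have k0_ge0 := pos_INR k0; have j_ge0 := pos_INR j.
have r_ge0 : 0 <= (INR l - INR k0) / (INR k0 + 1) by apply: Rdiv_le_0_compat; lra.
elim: j j_ge0 => [|j IH] _; first by rewrite addn0 /=; lra.
have j_ge0 := pos_INR j.
case: (ltnP (k0 + j) l) => [jl | lj]; last first.
  rewrite bin_small; last lia.
  by rewrite INR_0; apply: Rmult_le_pos; [apply: pos_INR | apply: pow_le].
rewrite addnS INR_binS //.
have step_le : (INR l - INR (k0 + j)) / (INR (k0 + j) + 1) <= (INR l - INR k0) / (INR k0 + 1).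
  have := lt_INRn _ _ jl; rewrite plus_INR => jlR.
  apply: (Rmult_le_reg_r ((INR k0 + 1) * (INR k0 + INR j + 1))); first nra.
  rewrite (_ : _ / _ * _ = (INR l - (INR k0 + INR j)) * (INR k0 + 1)); last by field; lra.
  by rewrite (_ : _ / _ * _ = (INR l - INR k0) * (INR k0 + INR j + 1)); [nra | field; lra].
rewrite /= (Rmult_comm _ (_ ^ j)) -Rmult_assoc.
apply: Rmult_le_compat => //; first exact: pos_INR; last exact: IH.
apply: Rdiv_le_0_compat; last by have := pos_INR (k0 + j); lra.
by have := lt_INRn _ _ jl; lra.
Qed.

Lemma bin_tail_le l k0 : (k0 <= l)%N -> (l < k0.*2)%N ->
  bin_tail l k0 <= INR 'C(l, k0) * ((INR k0 + 1) / (2 * INR k0 + 1 - INR l)).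
Proof.
move=> k0l lk0.
have lR : INR l + 1 <= 2 * INR k0 by have := le_INRn _ _ lk0; rewrite INR_double S_INR.
have k0_ge0 := pos_INR k0.
set r := (INR l - INR k0) / (INR k0 + 1).
have r_ge0 : 0 <= r by apply: Rdiv_le_0_compat; have := le_INRn _ _ k0l; lra.
have r_lt1 : r < 1 by rewrite /r; apply/Rlt_div_l; lra.
apply: (Rle_trans _ (sum_f_R0 (fun j => INR 'C(l, k0) * r ^ j) (l - k0))).
  by apply: sum_Rle => j _; apply: bin_shift_le_geom.
rewrite sum_f_R0_scal tech3; last lra.
apply: Rmult_le_compat_l; first exact: pos_INR.
rewrite (_ : (INR k0 + 1) / (2 * INR k0 + 1 - INR l) = 1 / (1 - r)); last by rewrite /r; field; lra.
apply: Rmult_le_compat_r; first by apply: Rlt_le; apply: Rinv_0_lt_compat; lra.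
by have := pow_le r (S (l - k0)) r_ge0; lra.
Qed.

Lemma geom_le_bin_shift l k0 J j : (k0 + J <= l)%N -> (j <= J)%N -> (1 <= J)%N ->
  INR 'C(l, k0) * ((INR l - INR k0 - INR J + 1) / (INR k0 + INR J)) ^ j <= INR 'C(l, k0 + j).
Proof.
move=> k0Jl jJ J_ge1; elim: j jJ => [|j IH] jJ; first by rewrite addn0 /=; lra.
have jl : (k0 + j < l)%N by lia.
have JR : 1 <= INR J by apply: (le_INRn 1).
have lR := le_INRn _ _ k0Jl; rewrite plus_INR in lR.
have jJR : INR j + 1 <= INR J by have := le_INRn _ _ jJ; rewrite S_INR.
have k0_ge0 := pos_INR k0; have j_ge0 := pos_INR j.
set rho := (INR l - INR k0 - INR J + 1) / (INR k0 + INR J).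
have rho_ge0 : 0 <= rho by apply: Rdiv_le_0_compat; lra.
have rho_le : rho <= (INR l - INR (k0 + j)) / (INR (k0 + j) + 1).
  rewrite plus_INR /rho.
  apply: (Rmult_le_reg_r ((INR k0 + INR J) * (INR k0 + INR j + 1))); first nra.
  rewrite (_ : (INR l - (INR k0 + INR j)) / _ * _ = (INR l - (INR k0 + INR j)) * (INR k0 + INR J));
    last by field; lra.
  by rewrite (_ : _ / _ * _ = (INR l - INR k0 - INR J + 1) * (INR k0 + INR j + 1)); [nra | field; lra].
rewrite addnS INR_binS // /= (Rmult_comm rho) -Rmult_assoc.
apply: Rmult_le_compat => //; last by apply: IH; lia.
by apply: Rmult_le_pos; [apply: pos_INR | apply: pow_le].
Qed.

Lemma bin_tail_ge l k0 J : (k0 + J <= l)%N -> (1 <= J)%N -> (l < k0.*2)%N ->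
  let rho := (INR l - INR k0 - INR J + 1) / (INR k0 + INR J) in
  INR 'C(l, k0) * ((1 - rho ^ J) / (1 - rho)) <= bin_tail l k0.
Proof.
move=> k0Jl J_ge1 lk0 rho.
have lR : INR l + 1 <= 2 * INR k0 by have := le_INRn _ _ lk0; rewrite INR_double S_INR.
have JR : 1 <= INR J by apply: (le_INRn 1).
have rho_lt1 : rho < 1 by rewrite /rho; apply/Rlt_div_l; have := pos_INR k0; lra.
apply: (Rle_trans _ (sum_f_R0 (fun j => INR 'C(l, k0 + j)) J.-1)).
  rewrite -(prednK J_ge1) -tech3 ?prednK //; last lra.
  rewrite -sum_f_R0_scal; apply: sum_Rle => j jJ.
  by apply: geom_le_bin_shift => //; apply/leP; lia.
by apply: sum_f_R0_le_N => [j|]; [apply: pos_INR | lia].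
Qed.

(** * The probability as a power of a block probability *)

Definition floor_nat (x : R) : nat := Z.to_nat (Int_part x).

Lemma floor_nat_bounds x : 0 <= x -> INR (floor_nat x) <= x < INR (floor_nat x) + 1.
Proof.
move=> x_ge0; have [lo up] := base_Int_part x.
have /lt_IZR I_gt : -1 < IZR (Int_part x) by lra.
by rewrite /floor_nat INR_IZR_INZ Z2Nat.id; [lra | lia].
Qed.

Lemma le_floor_nat x k : 0 <= x -> INR k <= x <-> (k <= floor_nat x)%N.
Proof.
move=> x_ge0; have [lo up] := floor_nat_bounds x x_ge0; split => [k_le | /le_INRn]; last lra.
by rewrite -ltnS; apply/ltP/INR_lt; rewrite S_INR; lra.
Qed.

Lemma INR_sum_nat (f : nat -> nat) K :
  INR (\sum_(0 <= i < K.+1) f i) = sum_f_R0 (fun i => INR (f i)) K.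
Proof.
elim: K => [|K IH]; first by rewrite big_nat1.
by rewrite big_nat_recr //= plus_INR IH.
Qed.

Lemma count_weight_gt l N : (N < l)%N ->
  INR (count (fun v => N < count id v)%N (bitseqs l)) = bin_tail l N.+1.
Proof.
move=> Nl; rewrite count_bitseqs_weight.
have -> : (\sum_(0 <= k < l.+1) (N < k) * 'C(l, k) = \sum_(N.+1 <= k < l.+1) 'C(l, k))%N.
  rewrite (big_nat_widenl N.+1 0 l.+1) // [in RHS]big_mkcond /=.
  by apply: eq_bigr => k _; case: (N < k)%N; rewrite ?mul1n ?mul0n.
rewrite -{1}(add0n N.+1) big_addn (_ : (l.+1 - N.+1 = (l - N.+1).+1)%N); last by lia.
by rewrite INR_sum_nat /bin_tail; apply: PartSum.sum_eq => i _; rewrite addnC.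
Qed.

Lemma card_Smax_le lam n N :
  #|[set w : {ffun 'I_n -> bool} | (Smax lam n w <= N)%N]|
  = (count (fun v => count id v <= N)%N (bitseqs (ell lam n)) ^ mblk lam n
     * 2 ^ (n - mblk lam n * ell lam n))%N.
Proof.
set l := ell lam n; set m := mblk lam n.
have ml_le : (m * l <= n)%N by rewrite /m /mblk leq_divM.
rewrite -count_all_blocks subnKC // -card_ffun_seq; apply: eq_card => w; rewrite !inE.
apply/bigmax_leqP/allP => [Smax_le j | blocks_le j _].
  rewrite mem_iota add0n => /andP [_ jm].
  have := Smax_le (Ordinal jm) isT; rewrite /block_sum -/l block_sum_count //.
  by apply: leq_trans ml_le; rewrite leq_mul2r jm orbT.
have := blocks_le j; rewrite mem_iota add0n ltn_ord /block_sum -/l block_sum_count //.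
  by apply.
by apply: leq_trans ml_le; rewrite leq_mul2r ltn_ord orbT.
Qed.

Lemma s_thr_ge0 lam beta n : 0 <= s_thr lam beta n.
Proof.
rewrite /s_thr; have := pos_INR (ell lam n); have := sqrt_pos (INR (ell lam n)).
by have := sqrt_pos (2 * (1 - lam) * ln (INR n) - ln (ln (INR n))
                     - 2 * ln (sqrt (4 * PI * (1 - lam)) * ln (/ beta))); nra.
Qed.

Lemma prob_event_eq lam beta n :
  let l := ell lam n in let N := floor_nat (s_thr lam beta n) in
  (N < l)%N -> prob_event lam beta n = (1 - bin_tail l N.+1 / 2 ^ l) ^ mblk lam n.
Proof.
move=> l N Nl; set m := mblk lam n.
rewrite /prob_event.
have -> : [set w : {ffun 'I_n -> bool} |
            if Rle_dec (INR (Smax lam n w)) (s_thr lam beta n) then true else false]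
          = [set w | (Smax lam n w <= N)%N].
  apply/setP => w; rewrite !inE; have := le_floor_nat _ (Smax lam n w) (s_thr_ge0 lam beta n).
  by case: Rle_dec => [? /iffLR -> // | Smax_gt /iffRL Smax_le]; apply/esym/negP => /Smax_le.
have count_le : INR (count (fun v => count id v <= N)%N (bitseqs l)) = 2 ^ l - bin_tail l N.+1.
  rewrite -(count_weight_gt _ _ Nl); have := f_equal INR (count_predC (fun v => count id v <= N)%N (bitseqs l)).
  rewrite size_bitseqs plus_INR INR_expn (_ : INR 2 = 2) /=; last lra.
  by rewrite (eq_count (a1 := predC _) (a2 := fun v => N < count id v)%N) => [|v]; [lra | rewrite /= ltnNge].
rewrite card_Smax_le mult_INR !INR_expn count_le (_ : INR 2 = 2) /=; last lra.
have p2 : 0 < 2 ^ l by apply: pow_lt; lra.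
have ml_le : (m * l <= n)%N by rewrite /m /mblk leq_divM.
have -> : 2 ^ n = (2 ^ l) ^ m * 2 ^ (n - m * l) by rewrite -pow_mult -pow_add; f_equal; lia.
have pm : 0 < (2 ^ l) ^ m by apply: pow_lt.
have pr : 0 < 2 ^ (n - m * l) by apply: pow_lt; lra.
rewrite (_ : 1 - _ / 2 ^ l = (2 ^ l - bin_tail l N.+1) * / 2 ^ l); last by field; lra.
by rewrite Rpow_mult_distr pow_inv -/m -/l; field; split; lra.
Qed.

(** * Asymptotics of the tail *)

Lemma exp_pow x (J : nat) : exp x ^ J = exp (INR J * x).
Proof.
elim: J => [|J IH]; first by rewrite /= Rmult_0_l exp_0.
by rewrite -tech_pow_Rmult IH -exp_plus S_INR; congr exp; ring.
Qed.

Lemma Rabs_sub_le x y : Rabs (x - y) <= Rabs x + Rabs y.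
Proof. by rewrite -(Rabs_Ropp y); apply: Rabs_triang. Qed.

Lemma exp_le_compat x y : x <= y -> exp x <= exp y.
Proof. by case/Rle_lt_or_eq_dec => [/exp_increasing/Rlt_le | ->] //; lra. Qed.

Lemma exp_opp_le x : 0 <= x -> exp (- x) <= 1 / (1 + x).
Proof.
move=> x_ge0; rewrite exp_Ropp /Rdiv Rmult_1_l.
by apply: Rinv_le_contravar; have := exp_ineq1_le x; lra.
Qed.

Lemma sqrt_ge8 x : 64 <= x -> 8 <= sqrt x.
Proof. by move=> x_ge; rewrite -(sqrt_square 8); [apply: sqrt_le_1_alt |]; lra. Qed.

Definition tail_err (l a : R) : R :=
  8 / l + 12 * (a + 1) ^ 3 / l ^ 2 + 2 * (2 * a + 1) / l + 4 * (sqrt l / a)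
  + 2 * (a + 2) / l + 3 / (2 * a).

(* The logarithm of the Gaussian approximation sqrt (2 / (PI l)) exp (- 2 a^2 / l) l / (4 a)
   of P(Bin(l, 1/2) > l/2 + a). *)
Definition tail_main_term (l a : R) : R :=
  - / 2 * ln (PI * l / 2) - 2 * a ^ 2 / l + ln (l / (4 * a)).

Section BinTailAsymptotics.

Variables (l : nat) (a : R).
Hypotheses (l_ge64 : 64 <= INR l) (a_ge2 : 2 <= a)
  (a_small : a + 1 + sqrt (INR l) <= INR l / 4) (a_large : 4 * sqrt (INR l) <= a).

Let k0 := (floor_nat (INR l / 2 + a)).+1.

Lemma tail_start_bounds : INR l / 2 + a < INR k0 <= INR l / 2 + a + 1.
Proof. by have := floor_nat_bounds (INR l / 2 + a) ltac:(lra); rewrite /k0 S_INR; lra. Qed.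

Lemma tail_start_le : (k0 <= l)%N.
Proof. by apply: INRn_le; have := tail_start_bounds; have := sqrt_pos (INR l); lra. Qed.

Lemma tail_start_gt_half : (l < k0.*2)%N.
Proof. by apply: INRn_le; rewrite INR_double S_INR; have := tail_start_bounds; lra. Qed.

Lemma tail_start_ge_uphalf : (uphalf l <= k0)%N.
Proof.
have := tail_start_gt_half; rewrite uphalf_half.
by have := odd_double_half l; case: (odd l) => /=; lia.
Qed.

Lemma tail_start_le_3quarter : (4 * k0 <= 3 * l)%N.
Proof.
apply: INRn_le; rewrite !mult_INR.
have -> : INR 4 = 4 by rewrite /=; lra.
have -> : INR 3 = 3 by rewrite /=; lra.
by have := tail_start_bounds; have := sqrt_pos (INR l); lra.
Qed.

Let w := sqrt (INR l) / a.
Let X := (INR k0 + 1) / (2 * INR k0 + 1 - INR l).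

Lemma w_bounds : 0 < w <= 1 / 4.
Proof.
have := (sqrt_ge8 _ l_ge64); split; first by apply: Rdiv_lt_0_compat; lra.
by apply/Rle_div_l; lra.
Qed.

(* The truncation length [J ~ sqrt l] balances the two errors of the geometric lower bound. *)
Lemma geom_ratio_pow_le :
  let J := floor_nat (sqrt (INR l)) in
  let rho := (INR l - INR k0 - INR J + 1) / (INR k0 + INR J) in
  0 <= rho /\ rho ^ J <= w.
Proof.
move=> J rho.
have [K_lo K_hi] := tail_start_bounds; have sqrt8 := (sqrt_ge8 _ l_ge64).
have sqrt_sqr := sqrt_sqrt (INR l) ltac:(lra).
have [J_lo J_hi] := floor_nat_bounds (sqrt (INR l)) ltac:(lra); rewrite -/J in J_lo J_hi.
have rho_ge0 : 0 <= rho by apply: Rdiv_le_0_compat; lra.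
have rho_le : rho <= 1 - 2 * a / INR l.
  apply: (Rmult_le_reg_r ((INR k0 + INR J) * INR l)); first nra.
  have -> : rho * ((INR k0 + INR J) * INR l) = (INR l - INR k0 - INR J + 1) * INR l.
    by rewrite /rho; field; lra.
  have -> : (1 - 2 * a / INR l) * ((INR k0 + INR J) * INR l)
            = (INR k0 + INR J) * INR l - 2 * a * (INR k0 + INR J) by field; lra.
  nra.
split => //.
have rhoJ_le : rho ^ J <= exp (INR J * - (2 * a / INR l)).
  by rewrite -exp_pow; apply: pow_incr; have := exp_ineq1_le (- (2 * a / INR l)); lra.
have expo_le : a / sqrt (INR l) <= INR J * (2 * a / INR l).
  apply: (Rmult_le_reg_r (sqrt (INR l) * INR l)); first nra.
  have -> : a / sqrt (INR l) * (sqrt (INR l) * INR l) = a * INR l by field; lra.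
  have -> : INR J * (2 * a / INR l) * (sqrt (INR l) * INR l) = 2 * a * INR J * sqrt (INR l).
    by field; lra.
  have : INR l <= 2 * INR J * sqrt (INR l) by nra.
  nra.
have exp_le : exp (INR J * - (2 * a / INR l)) <= exp (- (a / sqrt (INR l))).
  by apply: exp_le_compat; lra.
have := exp_opp_le (a / sqrt (INR l)) ltac:(apply: Rdiv_le_0_compat; lra).
have : 1 / (1 + a / sqrt (INR l)) <= w.
  rewrite /w (_ : sqrt (INR l) / a = / (a / sqrt (INR l))); last by field; lra.
  by rewrite /Rdiv Rmult_1_l; apply: Rinv_le_contravar; [apply: Rdiv_lt_0_compat |]; lra.
lra.
Qed.

Lemma bin_tail_ratio :
  (1 - 2 * w) * (INR 'C(l, k0) * X) <= bin_tail l k0 <= INR 'C(l, k0) * X.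
Proof.
have [K_lo K_hi] := tail_start_bounds; have sqrt8 := (sqrt_ge8 _ l_ge64); have [w_gt0 w_le] := w_bounds.
have C_gt0 := INR_bin_gt0 _ _ tail_start_le.
have X_gt0 : 0 < X by apply: Rdiv_lt_0_compat; lra.
split; last exact: bin_tail_le tail_start_le tail_start_gt_half.
set J := floor_nat (sqrt (INR l)).
have [J_lo J_hi] := floor_nat_bounds (sqrt (INR l)) ltac:(lra); rewrite -/J in J_lo J_hi.
have J_ge1 : (1 <= J)%N by apply: INRn_le; rewrite /=; lra.
have k0J_le : (k0 + J <= l)%N by apply: INRn_le; rewrite plus_INR; lra.
have := bin_tail_ge l k0 J k0J_le J_ge1 tail_start_gt_half.
have [rho_ge0 rhoJ_le] := geom_ratio_pow_le; rewrite -/J in rho_ge0 rhoJ_le.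
set rho := (INR l - INR k0 - INR J + 1) / (INR k0 + INR J) in rho_ge0 rhoJ_le * => tail_ge.
apply: Rle_trans tail_ge; rewrite -Rmult_assoc (Rmult_comm (1 - 2 * w)) Rmult_assoc.
apply: Rmult_le_compat_l; first lra.
have wa : w * a = sqrt (INR l) by rewrite /w; field; lra.
have den_gt0 : 0 < 2 * INR k0 + 2 * INR J - 1 - INR l by lra.
have num_le : (2 * INR k0 + 2 * INR J - 1 - INR l) * (1 - w) <= 2 * INR k0 + 1 - INR l.
  have : 0 <= w * (2 * INR J - 2) by apply: Rmult_le_pos; lra.
  have : 2 * sqrt (INR l) <= w * (2 * INR k0 + 1 - INR l) by nra.
  nra.
have X_le : (1 - w) * X <= (INR k0 + INR J) / (2 * INR k0 + 2 * INR J - 1 - INR l).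
  apply: (Rmult_le_reg_r ((2 * INR k0 + 1 - INR l) * (2 * INR k0 + 2 * INR J - 1 - INR l))); first nra.
  rewrite /X (_ : (1 - w) * _ * _ = (INR k0 + 1) * ((2 * INR k0 + 2 * INR J - 1 - INR l) * (1 - w)));
    last by field; lra.
  rewrite (_ : _ / _ * _ = (INR k0 + INR J) * (2 * INR k0 + 1 - INR l)); last by field; lra.
  by nra.
rewrite (_ : (1 - rho ^ J) / (1 - rho)
             = (1 - rho ^ J) * ((INR k0 + INR J) / (2 * INR k0 + 2 * INR J - 1 - INR l)));
  last by rewrite /rho; field; lra.
have wwX : 0 <= w * w * X by nra.
apply: (Rle_trans _ ((1 - w) * ((1 - w) * X))); first nra.
by apply: Rmult_le_compat; nra.
Qed.

Lemma ln_geom_factor :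
  Rabs (ln X - ln (INR l / (4 * a))) <= 2 * (a + 2) / INR l + 3 / (2 * a).
Proof.
have [K_lo K_hi] := tail_start_bounds.
set A := 2 * (INR k0 + 1) / INR l; set B := 2 * a / (2 * INR k0 + 1 - INR l).
have A_in : 1 <= A <= 1 + 2 * (a + 2) / INR l.
  have -> : 1 + 2 * (a + 2) / INR l = (INR l + 2 * (a + 2)) / INR l by field; lra.
  rewrite /A; split; first by apply/Rle_div_r; lra.
  by apply: Rmult_le_compat_r; [apply: Rlt_le; apply: Rinv_0_lt_compat |]; lra.
have B_in : 2 * a / (2 * a + 3) <= B <= 1.
  rewrite /B; split; first by apply: Rmult_le_compat_l; [| apply: Rinv_le_contravar]; lra.
  by apply/Rle_div_l; lra.
have B_gt0 : 0 < B by apply: Rlt_le_trans (proj1 B_in); apply: Rdiv_lt_0_compat; lra.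
have -> : ln X - ln (INR l / (4 * a)) = ln A + ln B.
  rewrite (_ : X = A * B * (INR l / (4 * a))); last by rewrite /X /A /B; field; lra.
  have AB_gt0 : 0 < A * B by apply: Rmult_lt_0_compat; lra.
  have q_gt0 : 0 < INR l / (4 * a) by apply: Rdiv_lt_0_compat; lra.
  by rewrite (ln_mult (A * B)) // ln_mult //; [ring | lra].
have lnA : Rabs (ln A) <= 2 * (a + 2) / INR l.
  have lnA_ge0 : 0 <= ln A by rewrite -ln_1; apply: ln_le; lra.
  by have := ln_le_sub1 A ltac:(lra); rewrite Rabs_right; lra.
have lnB : Rabs (ln B) <= 3 / (2 * a).
  have := Rabs_ln_le (2 * a / (2 * a + 3)) B ltac:(apply: Rdiv_lt_0_compat; lra) B_in.
  by rewrite (_ : (1 - _) / _ = 3 / (2 * a)); last by field; lra.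
by have := Rabs_triang (ln A) (ln B); lra.
Qed.

Lemma ln_bin_start :
  Rabs (ln (INR 'C(l, k0) / 2 ^ l) + / 2 * ln (PI * INR l / 2) + 2 * a ^ 2 / INR l)
  <= 8 / INR l + 12 * (a + 1) ^ 3 / INR l ^ 2 + 2 * (2 * a + 1) / INR l.
Proof.
have [K_lo K_hi] := tail_start_bounds.
have := bin_log_err_bound l k0 ltac:(apply: INRn_le; rewrite /=; lra)
          tail_start_ge_uphalf tail_start_le_3quarter.
have -> : 3 * (INR k0 - INR l / 2) * ((2 * INR k0 - INR l) / INR l) ^ 2
          = 12 * (INR k0 - INR l / 2) ^ 3 / INR l ^ 2 by field; lra.
move=> err_le.
have err_le' : Rabs (bin_log_err l k0) <= 8 / INR l + 12 * (a + 1) ^ 3 / INR l ^ 2.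
  apply: (Rle_trans _ _ _ err_le); apply: Rplus_le_compat_l.
  apply: Rmult_le_compat_r; first by apply: Rlt_le; apply: Rinv_0_lt_compat; apply: pow_lt; lra.
  by apply: Rmult_le_compat_l; [| apply: pow_incr]; lra.
have gauss_le : Rabs (gauss_exponent l k0 - 2 * a ^ 2 / INR l) <= 2 * (2 * a + 1) / INR l.
  rewrite /gauss_exponent (_ : _ - _ = 2 * ((INR k0 - INR l / 2) ^ 2 - a ^ 2) / INR l); last by field; lra.
  rewrite Rabs_right; last by apply: Rle_ge; apply: Rdiv_le_0_compat; nra.
  by apply: Rmult_le_compat_r; [apply: Rlt_le; apply: Rinv_0_lt_compat |]; nra.
rewrite (_ : _ + _ + _ = bin_log_err l k0 - (gauss_exponent l k0 - 2 * a ^ 2 / INR l));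
  last by rewrite /bin_log_err; ring.
by have := Rabs_sub_le (bin_log_err l k0) (gauss_exponent l k0 - 2 * a ^ 2 / INR l); lra.
Qed.

Lemma ln_bin_tail_approx :
  Rabs (ln (bin_tail l k0 / 2 ^ l) - tail_main_term (INR l) a) <= tail_err (INR l) a.
Proof.
rewrite /tail_main_term.
have [K_lo K_hi] := tail_start_bounds; have [w_gt0 w_le] := w_bounds.
have C_gt0 := INR_bin_gt0 _ _ tail_start_le.
have p2 : 0 < 2 ^ l by apply: pow_lt; lra.
have X_gt0 : 0 < X by apply: Rdiv_lt_0_compat; lra.
have [T_lo T_hi] := bin_tail_ratio.
set R0 := bin_tail l k0 / (INR 'C(l, k0) * X).
have R0_in : 1 - 2 * w <= R0 <= 1.
  by rewrite /R0; split; [apply/Rle_div_r | apply/Rle_div_l]; nra.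
have lnR0 : Rabs (ln R0) <= 4 * w.
  apply: (Rle_trans _ _ _ (Rabs_ln_le (1 - 2 * w) _ ltac:(lra) R0_in)).
  by apply/Rle_div_l; nra.
have -> : ln (bin_tail l k0 / 2 ^ l) = ln (INR 'C(l, k0) / 2 ^ l) + ln R0 + ln X.
  have c_gt0 : 0 < INR 'C(l, k0) / 2 ^ l by apply: Rdiv_lt_0_compat.
  have R0_gt0 : 0 < R0 by lra.
  rewrite -(ln_mult _ _ c_gt0 R0_gt0) -(ln_mult _ _ (Rmult_lt_0_compat _ _ c_gt0 R0_gt0) X_gt0).
  by congr ln; rewrite /R0; field; repeat split; nra.
have := ln_bin_start; have := ln_geom_factor.
rewrite /tail_err -/w.
set e1 := ln (INR 'C(l, k0) / 2 ^ l) + / 2 * ln (PI * INR l / 2) + 2 * a ^ 2 / INR l.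
set e2 := ln X - ln (INR l / (4 * a)).
rewrite (_ : _ + ln R0 + ln X - _ = e1 + ln R0 + e2); last by rewrite /e1 /e2; ring.
have := Rabs_triang (e1 + ln R0) e2; have := Rabs_triang e1 (ln R0).
lra.
Qed.

End BinTailAsymptotics.

(** * Asymptotics in n *)

Lemma is_lim_seq_comp_p_infty (f : R -> R) (u : nat -> R) (l : Rbar) :
  is_lim f p_infty l -> is_lim_seq u p_infty -> is_lim_seq (fun n => f (u n)) l.
Proof. by move=> fl ul; apply: is_lim_comp_seq fl _ ul; exists 0%nat. Qed.

Lemma is_lim_seq_abs_le0 (u v : nat -> R) :
  eventually (fun n => Rabs (u n) <= v n) -> is_lim_seq v 0 -> is_lim_seq u 0.
Proof.
move=> uv v0; apply/is_lim_seq_abs_0.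
apply: (is_lim_seq_le_le_loc _ _ _ _ _ (is_lim_seq_const 0) v0).
by apply: filter_imp uv => n; have := Rabs_pos (u n); lra.
Qed.

Lemma is_lim_seq_p_infty_gt (u : nat -> R) M :
  is_lim_seq u p_infty -> eventually (fun n => M < u n).
Proof. by move/is_lim_seq_spec; apply. Qed.

Lemma is_lim_seq_near (u : nat -> R) (l e : R) :
  is_lim_seq u l -> 0 < e -> eventually (fun n => Rabs (u n - l) < e).
Proof. by move=> /is_lim_seq_spec ul e_gt0; apply: (ul (mkposreal e e_gt0)). Qed.

Lemma is_lim_div_exp_0 : is_lim (fun y => y / exp y) p_infty 0.
Proof.
apply: (is_lim_ext_loc (fun y => / (exp y / y))); last first.
  by apply: (is_lim_inv _ _ _ is_lim_div_exp_p).
by exists 0 => y _; rewrite Rinv_div.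
Qed.

Lemma is_lim_seq_ln_INR : is_lim_seq (fun n => ln (INR n)) p_infty.
Proof. exact: is_lim_seq_comp_p_infty is_lim_ln_p is_lim_seq_INR. Qed.

Lemma eventually_ln_ge1 : eventually (fun n => 1 <= ln (INR n)).
Proof. by apply: filter_imp (is_lim_seq_p_infty_gt _ 1 is_lim_seq_ln_INR) => n; lra. Qed.

Lemma is_lim_seq_cube (u : nat -> R) (l : R) :
  is_lim_seq u l -> is_lim_seq (fun n => u n ^ 3) (l ^ 3).
Proof.
move=> ul; exact: is_lim_seq_mult' ul (is_lim_seq_mult' _ _ _ _ ul (is_lim_seq_mult' _ _ _ _ ul (is_lim_seq_const 1))).
Qed.

Lemma continuity_pt_exp x : continuity_pt exp x.
Proof. exact: derivable_continuous_pt (derivable_pt_exp x). Qed.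

Lemma continuity_pt_ln x : 0 < x -> continuity_pt ln x.
Proof. by move=> x_gt0; apply: derivable_continuous_pt; exists (/ x); apply: derivable_pt_lim_ln. Qed.

Lemma is_lim_seq_sqrt_p_infty (u : nat -> R) :
  is_lim_seq u p_infty -> is_lim_seq (fun n => sqrt (u n)) p_infty.
Proof. exact: is_lim_seq_comp_p_infty (is_lim_sqrt_p _ _ (is_lim_id _)). Qed.

Lemma is_lim_seq_pow_one_sub (M : nat -> nat) (q : nat -> R) (mu : R) :
  is_lim_seq q 0 -> is_lim_seq (fun n => INR (M n) * q n) mu ->
  is_lim_seq (fun n => (1 - q n) ^ M n) (exp (- mu)).
Proof.
move=> q0 Mq_mu.
have q_small := is_lim_seq_near _ _ (1 / 2) q0 ltac:(lra).
have err0 : is_lim_seq (fun n => INR (M n) * (ln (1 - q n) + q n)) 0.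
  apply: (is_lim_seq_abs_le0 _ (fun n => 2 * (Rabs (INR (M n) * q n) * Rabs (q n)))).
    apply: filter_imp q_small => n; rewrite Rminus_0_r => q_le.
    have err := Rabs_ln_one_sub_add (q n) ltac:(lra).
    rewrite (_ : q n ^ 2 = Rabs (q n) * Rabs (q n)) in err; last first.
      by rewrite -Rabs_mult Rabs_pos_eq /=; [ring | nra].
    rewrite !Rabs_mult (Rabs_pos_eq (INR (M n))); last exact: pos_INR.
    by apply: Rle_trans (Rmult_le_compat_l _ _ _ (pos_INR (M n)) err) _; right; ring.
  have := is_lim_seq_scal_l _ 2 _ (is_lim_seq_mult' _ _ _ _ (is_lim_seq_abs _ _ Mq_mu) (is_lim_seq_abs _ _ q0)).
  by rewrite Rabs_R0 Rmult_0_r /= Rmult_0_r.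
have := is_lim_seq_continuous exp _ _ (continuity_pt_exp _)
          (is_lim_seq_minus' _ _ _ _ err0 Mq_mu).
rewrite Rminus_0_l; apply: is_lim_seq_ext_loc; apply: filter_imp q_small => n.
rewrite Rminus_0_r => q_le; have : 0 < 1 - q n by split_Rabs; lra.
by move=> q1_gt0; rewrite -[in RHS](exp_ln _ q1_gt0) exp_pow; congr exp; ring.
Qed.

Section DeviationBounds.

Variables L D : R.
Hypotheses (L_ge64 : 64 <= L) (D_ge64 : 64 <= D) (D_cube_le : D ^ 3 / L <= 1).

Let s := sqrt L.
Let d := sqrt D.

Lemma sqrt_cube_ratio : sqrt (D ^ 3 / L) = d ^ 3 / s.
Proof.
have s8 : 8 <= s := sqrt_ge8 L L_ge64; have d8 : 8 <= d := sqrt_ge8 D D_ge64.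
have dd : D = d * d by rewrite /d sqrt_sqrt; lra.
have ss : L = s * s by rewrite /s sqrt_sqrt; lra.
rewrite (_ : D ^ 3 / L = (d ^ 3 / s) ^ 2); last by rewrite {1}dd {1}ss; field; lra.
by rewrite sqrt_pow2 //; apply: Rdiv_le_0_compat; [apply: pow_le |]; lra.
Qed.

Lemma dev_small : d <= s / 64.
Proof.
have s8 : 8 <= s := sqrt_ge8 L L_ge64; have d8 : 8 <= d := sqrt_ge8 D D_ge64.
have : d ^ 3 / s <= 1 by rewrite -sqrt_cube_ratio -sqrt_1; apply: sqrt_le_1_alt.
move/Rle_div_l => /(_ ltac:(lra)); rewrite /=; nra.
Qed.

Lemma dev_conditions :
  let a := s * d / 2 in 2 <= a /\ a + 1 + s <= L / 4 /\ 4 * s <= a.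
Proof.
move=> a; have s8 : 8 <= s := sqrt_ge8 L L_ge64; have d8 : 8 <= d := sqrt_ge8 D D_ge64; have := dev_small.
have ss : s * s = L by rewrite /s sqrt_sqrt; lra.
by rewrite /a; split; [| split]; nra.
Qed.

Lemma tail_err_le : tail_err L (s * d / 2) <= 8 / L + 17 * sqrt (D ^ 3 / L) + 9 / sqrt D.
Proof.
have s8 : 8 <= s := sqrt_ge8 L L_ge64; have d8 : 8 <= d := sqrt_ge8 D D_ge64; have d_le := dev_small.
have ss : s * s = L by rewrite /s sqrt_sqrt; lra.
rewrite sqrt_cube_ratio /tail_err -/s -/d -ss.
have d_cube : d <= d ^ 3 / 64 by rewrite /=; nra.
have ds_le : d / s <= d ^ 3 / s by apply: Rmult_le_compat_r; [apply: Rlt_le; apply: Rinv_0_lt_compat |]; nra.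
have t1 : 12 * (s * d / 2 + 1) ^ 3 / (s * s) ^ 2 <= 12 * (d ^ 3 / s).
  apply: (Rle_trans _ (12 * (s * d) ^ 3 / (s * s) ^ 2)); last by right; field; lra.
  apply: Rmult_le_compat_r; first by apply: Rlt_le; apply: Rinv_0_lt_compat; apply: pow_lt; nra.
  by apply: Rmult_le_compat_l; [| apply: pow_incr]; nra.
have t2 : 2 * (2 * (s * d / 2) + 1) / (s * s) <= 3 * (d ^ 3 / s).
  apply: (Rle_trans _ (3 * (d / s))); last lra.
  by apply/Rle_div_l; [nra | rewrite (_ : 3 * (d / s) * (s * s) = 3 * d * s); [nra | field; lra]].
have t3 : 4 * (s / (s * d / 2)) = 8 / d by field; lra.
have t4 : 2 * (s * d / 2 + 2) / (s * s) <= 2 * (d ^ 3 / s).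
  apply: (Rle_trans _ (2 * (d / s))); last lra.
  by apply/Rle_div_l; [nra | rewrite (_ : 2 * (d / s) * (s * s) = 2 * d * s); [nra | field; lra]].
have t5 : 3 / (2 * (s * d / 2)) <= 1 / d.
  by apply/Rle_div_l; [nra | rewrite (_ : 1 / d * _ = s); [lra | field; lra]].
lra.
Qed.

End DeviationBounds.

Section Asymptotics.

Variables lam beta : R.
Hypotheses (lam_in : 0 < lam < 1) (beta_in : 0 < beta < 1).

Definition kappa : R := 2 * ln (sqrt (4 * PI * (1 - lam)) * ln (/ beta)).
Definition rad (n : nat) : R := 2 * (1 - lam) * ln (INR n) - ln (ln (INR n)) - kappa.
Definition blen (n : nat) : R := INR (ell lam n).
Definition nblocks (n : nat) : R := INR (mblk lam n).
Definition dev (n : nat) : R := sqrt (blen n) * sqrt (rad n) / 2.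
Definition tail_prob (n : nat) : R :=
  bin_tail (ell lam n) (floor_nat (s_thr lam beta n)).+1 / 2 ^ ell lam n.

Lemma s_thr_eq n : s_thr lam beta n = blen n / 2 + dev n.
Proof. by rewrite /s_thr /dev /blen /rad /kappa; field. Qed.

Lemma blen_bounds n : exp (lam * ln (INR n)) - 1 < blen n <= exp (lam * ln (INR n)).
Proof.
rewrite /blen (_ : ell lam n = floor_nat (exp (lam * ln (INR n)))) //.
by have := floor_nat_bounds _ (Rlt_le _ _ (exp_pos (lam * ln (INR n)))); lra.
Qed.

Lemma is_lim_seq_blen : is_lim_seq blen p_infty.
Proof.
apply: (is_lim_seq_le_p_loc (fun n => lam * ln (INR n))).
  by exists 0%nat => n _; have := blen_bounds n; have := exp_ineq1_le (lam * ln (INR n)); lra.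
apply: (is_lim_seq_mult _ _ _ _ _ (is_lim_seq_const lam) is_lim_seq_ln_INR).
by apply: is_Rbar_mult_sym; apply: is_Rbar_mult_p_infty_pos; rewrite /=; lra.
Qed.

Lemma is_lim_seq_rad_ratio : is_lim_seq (fun n => rad n / ln (INR n)) (2 * (1 - lam)).
Proof.
have lnln := is_lim_seq_comp_p_infty _ _ _ is_lim_div_ln_p is_lim_seq_ln_INR.
have inv := is_lim_seq_inv _ _ is_lim_seq_ln_INR ltac:(discriminate).
have := is_lim_seq_minus' _ _ _ _ (is_lim_seq_minus' _ _ _ _ (is_lim_seq_const (2 * (1 - lam))) lnln)
          (is_lim_seq_mult' _ _ _ _ (is_lim_seq_const kappa) inv).
rewrite !Rminus_0_r Rmult_0_r Rminus_0_r.
apply: is_lim_seq_ext_loc; apply: filter_imp eventually_ln_ge1 => n t_ge1.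
by rewrite /rad; field; lra.
Qed.

Lemma is_lim_seq_rad : is_lim_seq rad p_infty.
Proof.
apply: (is_lim_seq_ext_loc (fun n => ln (INR n) * (rad n / ln (INR n)))).
  by apply: filter_imp eventually_ln_ge1 => n t_ge1; field; lra.
apply: (is_lim_seq_mult _ _ _ _ _ is_lim_seq_ln_INR is_lim_seq_rad_ratio).
by apply: is_Rbar_mult_p_infty_pos; rewrite /=; lra.
Qed.

Lemma is_lim_seq_pow_ratio : is_lim_seq (fun n => exp (lam * ln (INR n)) / INR n) 0.
Proof.
apply: (is_lim_seq_ext_loc (fun n => exp (- (1 - lam) * ln (INR n)))).
  apply: filter_imp (is_lim_seq_p_infty_gt _ 0 is_lim_seq_INR) => n n_gt0.
  by rewrite -[in X in _ = _ / X](exp_ln _ n_gt0) /Rdiv -exp_Ropp -exp_plus; congr exp; ring.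
apply: (is_lim_comp_seq exp _ m_infty _ is_lim_exp_m); first by exists 0%nat.
apply: (is_lim_seq_mult _ _ _ _ _ (is_lim_seq_const (- (1 - lam))) is_lim_seq_ln_INR).
by apply: is_Rbar_mult_sym; apply: is_Rbar_mult_p_infty_neg; rewrite /=; lra.
Qed.

Lemma is_lim_seq_ln_cube_exp : is_lim_seq (fun n => ln (INR n) ^ 3 / exp (lam * ln (INR n))) 0.
Proof.
have y_lim : is_lim_seq (fun n => lam / 3 * ln (INR n)) p_infty.
  apply: (is_lim_seq_mult _ _ _ _ _ (is_lim_seq_const (lam / 3)) is_lim_seq_ln_INR).
  by apply: is_Rbar_mult_sym; apply: is_Rbar_mult_p_infty_pos; rewrite /=; lra.
have := is_lim_seq_mult' _ _ _ _ (is_lim_seq_const ((3 / lam) ^ 3))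
          (is_lim_seq_cube _ _ (is_lim_seq_comp_p_infty _ _ _ is_lim_div_exp_0 y_lim)).
rewrite pow_ne_zero // Rmult_0_r; apply: is_lim_seq_ext => n.
have -> : exp (lam * ln (INR n)) = exp (lam / 3 * ln (INR n)) ^ 3.
  by rewrite exp_pow (_ : INR 3 = 3); [congr exp; field | rewrite /=; lra].
by field; split; [apply: Rgt_not_eq; apply: exp_pos | lra].
Qed.

Lemma is_lim_seq_rad_cube_ratio : is_lim_seq (fun n => rad n ^ 3 / blen n) 0.
Proof.
apply: (is_lim_seq_abs_le0 _
  (fun n => 2 * ((rad n / ln (INR n)) ^ 3 * (ln (INR n) ^ 3 / exp (lam * ln (INR n)))))).
  apply: filter_imp (filter_and _ _ eventually_ln_ge1 (filter_and _ _
           (is_lim_seq_p_infty_gt _ 0 is_lim_seq_rad) (is_lim_seq_p_infty_gt _ 1 is_lim_seq_blen))).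
  move=> n [t_ge1 [rad_gt0 blen_gt1]]; have [E_lo E_hi] := blen_bounds n.
  have E_gt0 := exp_pos (lam * ln (INR n)); have rad3_gt0 := pow_lt _ 3 rad_gt0.
  rewrite Rabs_right; last by apply: Rle_ge; apply: Rdiv_le_0_compat; lra.
  rewrite (_ : 2 * _ = 2 * rad n ^ 3 / exp (lam * ln (INR n))); last by field; lra.
  apply: (Rmult_le_reg_r (blen n * exp (lam * ln (INR n)))); first nra.
  rewrite (_ : rad n ^ 3 / blen n * _ = rad n ^ 3 * exp (lam * ln (INR n))); last by field; lra.
  by rewrite (_ : 2 * rad n ^ 3 / _ * _ = rad n ^ 3 * (2 * blen n)); [nra | field; lra].
have := is_lim_seq_mult' _ _ _ _ (is_lim_seq_const 2)
          (is_lim_seq_mult' _ _ _ _ (is_lim_seq_cube _ _ is_lim_seq_rad_ratio) is_lim_seq_ln_cube_exp).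
by rewrite !Rmult_0_r.
Qed.

Lemma nblocks_bounds n : 1 <= blen n -> nblocks n * blen n <= INR n < (nblocks n + 1) * blen n.
Proof.
move=> blen_ge1; have ell_gt0 : (0 < ell lam n)%N by apply: INRn_le; rewrite /=; rewrite -/(blen n); lra.
split; first by rewrite /nblocks /blen -mult_INR; apply: le_INRn; rewrite leq_divM.
by rewrite /nblocks /blen -S_INR -mult_INR; apply: lt_INRn; rewrite ltn_ceil.
Qed.

Lemma nblocks_ge n : (0 < n)%N -> 1 <= blen n -> exp (lam * ln (INR n)) / INR n <= 1 / 2 ->
  INR n / (2 * exp (lam * ln (INR n))) <= nblocks n.
Proof.
move=> n_gt0 blen_ge1 E_le.
have n_gtR : 0 < INR n by apply: (lt_INRn 0).
have [_ E_ge] := blen_bounds n; have [_ n_lt] := nblocks_bounds n blen_ge1.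
set E := exp (lam * ln (INR n)) in E_le E_ge *.
have E_gt0 : 0 < E by rewrite /E; apply: exp_pos.
have n_ge : 2 * E <= INR n by move: E_le; rewrite Rle_div_l; lra.
have M_gt : INR n / E - 1 < nblocks n.
  apply/Rlt_minus_l/Rlt_div_l => //; have := pos_INR (mblk lam n); rewrite -/(nblocks n); nra.
suff : INR n / (2 * E) <= INR n / E - 1 by lra.
apply/Rle_div_l; first lra.
by rewrite Rmult_minus_distr_r (_ : INR n / E * (2 * E) = 2 * INR n); [lra | field; lra].
Qed.

Lemma ln_nblocks_err n : (0 < n)%N -> 1 <= blen n -> exp (lam * ln (INR n)) / INR n <= 1 / 2 ->
  Rabs (ln (nblocks n) - (1 - lam) * ln (INR n))
  <= 2 * (exp (lam * ln (INR n)) / INR n) + / blen n.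
Proof.
move=> n_gt0 blen_ge1 E_le.
have n_gtR : 0 < INR n by apply: (lt_INRn 0).
have [E_lo E_hi] := blen_bounds n; have [Ml_le n_lt] := nblocks_bounds n blen_ge1.
have M_ge := nblocks_ge n n_gt0 blen_ge1 E_le.
set E := exp (lam * ln (INR n)) in E_le E_lo E_hi M_ge *.
have E_gt0 : 0 < E by rewrite /E; apply: exp_pos.
have M_gt0 : 0 < nblocks n by apply: Rlt_le_trans M_ge; apply: Rdiv_lt_0_compat; lra.
have -> : ln (nblocks n) - (1 - lam) * ln (INR n) = ln (nblocks n * blen n / INR n) + ln (E / blen n).
  rewrite !ln_div; try nra; rewrite ln_mult ?ln_exp; lra.
have e_ge0 : 0 <= E / INR n by apply: Rdiv_le_0_compat; lra.
have ratio_in : 1 - E / INR n <= nblocks n * blen n / INR n <= 1.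
  split; last by apply/Rle_div_l; lra.
  apply/Rle_div_r => //; rewrite Rmult_minus_distr_r (_ : E / INR n * INR n = E); [nra | field; lra].
have ln_ratio : Rabs (ln (nblocks n * blen n / INR n)) <= 2 * (E / INR n).
  apply: (Rle_trans _ _ _ (Rabs_ln_le (1 - E / INR n) _ ltac:(lra) ratio_in)).
  by apply/Rle_div_l; nra.
have ln_E : Rabs (ln (E / blen n)) <= / blen n.
  have E_ratio : 1 <= E / blen n by apply/Rle_div_r; lra.
  rewrite Rabs_right; last by apply: Rle_ge; rewrite -ln_1; apply: ln_le; lra.
  have : E / blen n <= / blen n + 1.
    by apply/Rle_div_l; [lra | rewrite Rmult_plus_distr_r Rinv_l; lra].
  by have := ln_le_sub1 (E / blen n) ltac:(lra); lra.
by have := Rabs_triang (ln (nblocks n * blen n / INR n)) (ln (E / blen n)); lra.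
Qed.

Lemma eventually_blocks_regime :
  eventually (fun n => [/\ (0 < n)%N, 1 <= blen n & exp (lam * ln (INR n)) / INR n <= 1 / 2]).
Proof.
have large : eventually (fun n => (0 < n)%N /\ 1 < blen n /\
                                   Rabs (exp (lam * ln (INR n)) / INR n - 0) < 1 / 2).
  apply: filter_and; first by exists 1%nat => n /leP.
  apply: filter_and; first exact: is_lim_seq_p_infty_gt is_lim_seq_blen.
  by apply: is_lim_seq_near is_lim_seq_pow_ratio _; lra.
apply: filter_imp large => n [n_gt0 [blen_gt1 near]]; split => //; first lra.
by have := Rle_abs (exp (lam * ln (INR n)) / INR n - 0); lra.
Qed.

Lemma eventually_inv_nblocks_le :
  eventually (fun n => 0 < / nblocks n <= 2 * (exp (lam * ln (INR n)) / INR n)).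
Proof.
apply: filter_imp eventually_blocks_regime => n [n_gt0 blen_ge1 E_le].
have M_ge := nblocks_ge n n_gt0 blen_ge1 E_le.
have n_gtR : 0 < INR n by apply: (lt_INRn 0).
have E_gt0 := exp_pos (lam * ln (INR n)).
have q_gt0 : 0 < INR n / (2 * exp (lam * ln (INR n))) by apply: Rdiv_lt_0_compat; lra.
split; first by apply: Rinv_0_lt_compat; lra.
rewrite (_ : 2 * _ = / (INR n / (2 * exp (lam * ln (INR n))))); last by field; lra.
exact: Rinv_le_contravar.
Qed.

Lemma is_lim_seq_ln_nblocks_err :
  is_lim_seq (fun n => ln (nblocks n) - (1 - lam) * ln (INR n)) 0.
Proof.
apply: (is_lim_seq_abs_le0 _ (fun n => 2 * (exp (lam * ln (INR n)) / INR n) + / blen n)).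
  by apply: filter_imp eventually_blocks_regime => n [? ? ?]; apply: ln_nblocks_err.
have := is_lim_seq_plus' _ _ _ _ (is_lim_seq_scal_l _ 2 _ is_lim_seq_pow_ratio)
          (is_lim_seq_inv _ _ is_lim_seq_blen ltac:(discriminate)).
by rewrite /= Rmult_0_r Rplus_0_r.
Qed.

Lemma ln_tail_prob_err n : 64 <= blen n -> 64 <= rad n -> rad n ^ 3 / blen n <= 1 ->
  0 < tail_prob n /\
  Rabs (ln (tail_prob n) - tail_main_term (blen n) (dev n))
  <= 8 / blen n + 17 * sqrt (rad n ^ 3 / blen n) + 9 / sqrt (rad n).
Proof.
move=> blen_ge D_ge ratio_le.
have [a_ge2 [a_small a_large]] := dev_conditions _ _ blen_ge D_ge ratio_le.
rewrite /tail_prob s_thr_eq; split.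
  apply: Rdiv_lt_0_compat; last by apply: pow_lt; lra.
  by apply: bin_tail_gt0; apply: tail_start_le.
by apply: Rle_trans (tail_err_le _ _ blen_ge D_ge ratio_le); apply: ln_bin_tail_approx.
Qed.

Lemma eventually_tail_regime :
  eventually (fun n => 64 <= blen n /\ 64 <= rad n /\ rad n ^ 3 / blen n <= 1).
Proof.
have large : eventually (fun n => 64 < blen n /\ 64 < rad n /\ Rabs (rad n ^ 3 / blen n - 0) < 1).
  apply: filter_and; first exact: is_lim_seq_p_infty_gt is_lim_seq_blen.
  apply: filter_and; first exact: is_lim_seq_p_infty_gt is_lim_seq_rad.
  exact: is_lim_seq_near is_lim_seq_rad_cube_ratio Rlt_0_1.
apply: filter_imp large => n [blen_gt [rad_gt near]].
by have := Rle_abs (rad n ^ 3 / blen n - 0); lra.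
Qed.

Lemma is_lim_seq_ln_tail_prob_err :
  is_lim_seq (fun n => ln (tail_prob n) - tail_main_term (blen n) (dev n)) 0.
Proof.
apply: (is_lim_seq_abs_le0 _
  (fun n => 8 / blen n + 17 * sqrt (rad n ^ 3 / blen n) + 9 / sqrt (rad n))).
  by apply: filter_imp eventually_tail_regime => n [? [? ?]]; case: (ln_tail_prob_err n).
have inv_blen := is_lim_seq_inv _ _ is_lim_seq_blen ltac:(discriminate).
have inv_sqrt := is_lim_seq_inv _ _ (is_lim_seq_sqrt_p_infty _ is_lim_seq_rad) ltac:(discriminate).
have sqrt_ratio := is_lim_seq_continuous _ _ _ (continuity_pt_sqrt 0 (Rle_refl 0)) is_lim_seq_rad_cube_ratio.
have := is_lim_seq_plus' _ _ _ _ (is_lim_seq_plus' _ _ _ _ (is_lim_seq_scal_l _ 8 _ inv_blen)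
          (is_lim_seq_scal_l _ 17 _ sqrt_ratio)) (is_lim_seq_scal_l _ 9 _ inv_sqrt).
by rewrite sqrt_0 /= !Rmult_0_r !Rplus_0_r.
Qed.

(* The constant [kappa] of the threshold is exactly what makes the main terms cancel. *)
Lemma main_term_eq n : 1 <= ln (INR n) -> 0 < blen n -> 0 < rad n ->
  (1 - lam) * ln (INR n) + tail_main_term (blen n) (dev n) - ln (ln (/ beta))
  = / 2 * ln (2 * (1 - lam)) - / 2 * ln (rad n / ln (INR n)).
Proof.
move=> t_ge1 blen_gt0 rad_gt0.
have pi_gt0 := PI_RGT_0; have [lam_gt0 lam_lt1] := lam_in.
have Lb_gt0 : 0 < ln (/ beta).
  by rewrite -ln_1; apply: ln_increasing; [lra | rewrite -Rinv_1; apply: Rinv_lt_contravar; lra].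
have sl_gt0 : 0 < sqrt (blen n) by apply: sqrt_lt_R0.
have sD_gt0 : 0 < sqrt (rad n) by apply: sqrt_lt_R0.
have ln_sqrt x : 0 < x -> ln (sqrt x) = ln x / 2.
  by move=> x_gt0; rewrite -{2}(sqrt_sqrt x) ?ln_mult; try apply: sqrt_lt_R0; lra.
have dev_sqr : 2 * dev n ^ 2 / blen n = rad n / 2.
  rewrite /dev (_ : (sqrt (blen n) * sqrt (rad n) / 2) ^ 2
                    = sqrt (blen n) * sqrt (blen n) * (sqrt (rad n) * sqrt (rad n)) / 4); last by field.
  by rewrite !sqrt_sqrt; [field |..]; lra.
have ln_ratio : ln (blen n / (4 * dev n)) = ln (blen n) / 2 - ln 2 - ln (rad n) / 2.
  rewrite (_ : blen n / (4 * dev n) = sqrt (blen n) / (2 * sqrt (rad n))); last first.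
    by rewrite /dev -{1}(sqrt_sqrt (blen n)); [field |]; lra.
  by rewrite ln_div ?ln_mult ?ln_sqrt //; try lra; ring.
have ln4 : ln 4 = 2 * ln 2.
  by rewrite (_ : 4 = 2 * 2) ?(ln_mult 2 2); [ring | lra | lra | ring].
have kappa_eq : kappa = 2 * ln 2 + ln PI + ln (1 - lam) + 2 * ln (ln (/ beta)).
  have c_gt0 : 0 < 4 * PI * (1 - lam) by nra.
  rewrite /kappa (ln_mult _ _ (sqrt_lt_R0 _ c_gt0) Lb_gt0) (ln_sqrt _ c_gt0).
  rewrite (ln_mult (4 * PI) (1 - lam)) ?(ln_mult 4 PI) ?ln4; [field | lra | lra | nra | lra].
have t_gt0 : 0 < ln (INR n) by lra.
rewrite /tail_main_term dev_sqr ln_ratio (ln_div _ _ rad_gt0 t_gt0).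
rewrite (ln_div (PI * blen n) 2) ?(ln_mult PI (blen n)) ?(ln_mult 2 (1 - lam)); try nra.
by rewrite /rad kappa_eq; field.
Qed.

Lemma is_lim_seq_main_term :
  is_lim_seq (fun n => (1 - lam) * ln (INR n) + tail_main_term (blen n) (dev n) - ln (ln (/ beta))) 0.
Proof.
have c_gt0 : 0 < 2 * (1 - lam) by lra.
have := is_lim_seq_minus' _ _ _ _ (is_lim_seq_const (/ 2 * ln (2 * (1 - lam))))
          (is_lim_seq_scal_l _ (/ 2) _ (is_lim_seq_continuous _ _ _ (continuity_pt_ln _ c_gt0)
                                          is_lim_seq_rad_ratio)).
rewrite /= Rminus_diag; apply: is_lim_seq_ext_loc.
have large : eventually (fun n => 1 <= ln (INR n) /\ 0 < blen n /\ 0 < rad n).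
  apply: filter_and; first exact: eventually_ln_ge1.
  by apply: filter_and; apply: is_lim_seq_p_infty_gt; [exact: is_lim_seq_blen | exact: is_lim_seq_rad].
by apply: filter_imp large => n [t_ge1 [blen_gt0 rad_gt0]]; rewrite main_term_eq.
Qed.


Lemma is_lim_seq_ln_mean : is_lim_seq (fun n => ln (nblocks n * tail_prob n)) (ln (ln (/ beta))).
Proof.
have := is_lim_seq_plus' _ _ _ _ (is_lim_seq_plus' _ _ _ _ (is_lim_seq_plus' _ _ _ _
          is_lim_seq_ln_nblocks_err is_lim_seq_ln_tail_prob_err) is_lim_seq_main_term)
          (is_lim_seq_const (ln (ln (/ beta)))).
rewrite !Rplus_0_l; apply: is_lim_seq_ext_loc.
apply: filter_imp (filter_and _ _ eventually_inv_nblocks_le eventually_tail_regime).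
move=> n [[Minv_gt0 _] [blen_ge [rad_ge ratio_le]]].
have [q_gt0 _] := ln_tail_prob_err n blen_ge rad_ge ratio_le.
have M_gt0 : 0 < nblocks n by rewrite -(Rinv_inv (nblocks n)); apply: Rinv_0_lt_compat.
by rewrite ln_mult //; ring.
Qed.

Lemma is_lim_seq_mean : is_lim_seq (fun n => nblocks n * tail_prob n) (ln (/ beta)).
Proof.
have Lb_gt0 : 0 < ln (/ beta).
  by rewrite -ln_1; apply: ln_increasing; [lra | rewrite -Rinv_1; apply: Rinv_lt_contravar; lra].
have := is_lim_seq_continuous exp _ _ (continuity_pt_exp _) is_lim_seq_ln_mean.
rewrite exp_ln //; apply: is_lim_seq_ext_loc.
apply: filter_imp (filter_and _ _ eventually_inv_nblocks_le eventually_tail_regime).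
move=> n [[Minv_gt0 _] [blen_ge [rad_ge ratio_le]]].
have [q_gt0 _] := ln_tail_prob_err n blen_ge rad_ge ratio_le.
have M_gt0 : 0 < nblocks n by rewrite -(Rinv_inv (nblocks n)); apply: Rinv_0_lt_compat.
by rewrite exp_ln //; apply: Rmult_lt_0_compat.
Qed.

Lemma is_lim_seq_tail_prob : is_lim_seq tail_prob 0.
Proof.
have inv_M : is_lim_seq (fun n => / nblocks n) 0.
  apply: (is_lim_seq_abs_le0 _ (fun n => 2 * (exp (lam * ln (INR n)) / INR n))).
    by apply: filter_imp eventually_inv_nblocks_le => n [? ?]; rewrite Rabs_pos_eq; lra.
  by have := is_lim_seq_scal_l _ 2 _ is_lim_seq_pow_ratio; rewrite /= Rmult_0_r.
have := is_lim_seq_mult' _ _ _ _ is_lim_seq_mean inv_M; rewrite Rmult_0_r.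
apply: is_lim_seq_ext_loc; apply: filter_imp eventually_inv_nblocks_le => n [Minv_gt0 _].
have M_gt0 : 0 < nblocks n by rewrite -(Rinv_inv (nblocks n)); apply: Rinv_0_lt_compat.
by field; lra.
Qed.

Lemma eventually_threshold_lt_blen :
  eventually (fun n => (floor_nat (s_thr lam beta n) < ell lam n)%N).
Proof.
apply: filter_imp eventually_tail_regime => n [blen_ge [rad_ge ratio_le]].
have [a_ge2 [a_small _]] := dev_conditions _ _ blen_ge rad_ge ratio_le.
apply: INRn_le; rewrite S_INR -/(blen n).
have := floor_nat_bounds (s_thr lam beta n) (s_thr_ge0 lam beta n).
by rewrite s_thr_eq /dev; have := sqrt_pos (blen n); lra.
Qed.

End Asymptotics.

Theorem lemma2p2 (lam beta : R) :
  (0 < lam < 1)%R -> (0 < beta < 1)%R ->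
  Un_cv (fun n : nat => prob_event lam beta n) beta.
Proof.
move=> lam_in beta_in; apply/is_lim_seq_Reals.
have := is_lim_seq_pow_one_sub (mblk lam) (tail_prob lam beta) _
          (is_lim_seq_tail_prob lam beta lam_in beta_in) (is_lim_seq_mean lam beta lam_in beta_in).
rewrite ln_Rinv ?Ropp_involutive ?exp_ln; try lra.
apply: is_lim_seq_ext_loc; apply: filter_imp (eventually_threshold_lt_blen lam beta lam_in).
by move=> n N_lt; rewrite prob_event_eq.
Qed.
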